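(* Let $q\ge1$, $\delta>0$, $\sigma\ne 0$ real, and real $a_k,b_k$ with $b_k>a_k>0$ for $k=1,\dots,q$. Define, for $x>-1$, $$ f(x)=\frac{{}_{q+1}F_q\left(\sigma,a_1+\delta,\dots,a_q+\delta;b_1+\delta,\dots,b_q+\delta;-x\right)}{{}_{q+1}F_q\left(\sigma,a_1,\dots,a_q;b_1,\dots,b_q;-x\right)}. $$ Then $f$ is monotone decreasing on $(-1,\infty)$ if $\sigma>0$ and monotone increasing on $(-1,\infty)$ if $\sigma<0$.
   Context: ${}_{q+1}F_q(\alpha_1,\dots,\alpha_{q+1};\beta_1,\dots,\beta_q;z)=\sum_{n\ge0}\frac{(\alpha_1)_n\cdots(\alpha_{q+1})_n}{(\beta_1)_n\cdots(\beta_q)_n n!}z^n$ with $(a)_n=a(a+1)\cdots(a+n-1)$, analytically continued to $\mathbb C\setminus[1,\infty)$ (so the functions above are defined for $x>-1$). *)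

From Stdlib Require Import Reals ClassicalEpsilon.
From Coquelicot Require Import Coquelicot.
Open Scope R_scope.

Fixpoint poch (a : R) (n : nat) : R :=
  match n with
  | O => 1
  | S m => poch a m * (a + INR m)
  end.

Fixpoint prodR (q : nat) (g : nat -> R) : R :=
  match q with
  | O => 1
  | S m => prodR m g * g m
  end.

(* n-th coefficient of  q+1Fq(s, a_0..a_{q-1}; b_0..b_{q-1}; z). *)
Definition hyp_coef (q : nat) (s : R) (a b : nat -> R) (n : nat) : R :=
  poch s n * prodR q (fun k => poch (a k) n / poch (b k) n) / INR (Factorial.fact n).

(* g is the analytic continuation of the hypergeometric series to the real
   part (-oo,1) of C \ [1,oo): g equals the series on (-1,1) and g is real
   analytic on (-oo,1) (locally a convergent power series). *)
Definition is_hyp_continuation (q : nat) (s : R) (a b : nat -> R)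
    (g : R -> R) : Prop :=
  (forall z, -1 < z < 1 ->
     is_series (fun n => hyp_coef q s a b n * z ^ n) (g z)) /\
  (forall z0, z0 < 1 ->
     exists r, 0 < r /\ exists c : nat -> R,
       forall z, Rabs (z - z0) < r -> z < 1 ->
         is_series (fun n => c n * (z - z0) ^ n) (g z)).

(* The (analytically continued) function q+1Fq(s, a; b; .) on (-oo,1):
   a continuation chosen by the description operator (unique on (-oo,1)). *)
Definition hypF (q : nat) (s : R) (a b : nat -> R) : R -> R :=
  epsilon (inhabits (fun _ : R => 0)) (is_hyp_continuation q s a b).

From Stdlib Require Import Reals Lra Lia ClassicalEpsilon Classical Factorial.
From Coquelicot Require Import Coquelicot.
Open Scope R_scope.

(* Let T be a product of q independent Beta(a_k, b_k - a_k) variables. Its moments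
   E[T^n] = prod_k (a_k)_n / (b_k)_n together with the binomial series give
   q+1Fq(sigma; a; b; z) = E[(1 - z T)^(-sigma)], and the right-hand side is analytic on
   z < 1, so it is the continuation. Replacing a_k, b_k by a_k + delta, b_k + delta tilts
   the law of T by T^delta, hence

     f(x) = E[T^delta W_x] / (E[T^delta] E[W_x]),   W_x = (1 + x T)^(-sigma).

   For x < y the likelihood ratio W_y / W_x = ((1 + y T) / (1 + x T))^(-sigma) is
   monotone in T: decreasing if sigma > 0, increasing if sigma < 0. Chebyshev's
   correlation inequality for the measure W_x dP, applied to T^delta and this ratio,
   compares f(y) with f(x).

   Expectations are modelled as positive normalized linear functionals on continuous
   functions that only see [0,1]; Beta expectations are improper Riemann integrals. *)

(** * Binomial series *)

Definition binom_coef (s : R) (n : nat) : R := poch s n / INR (fact n).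

Lemma binom_coef_0 s : binom_coef s 0 = 1.
Proof. unfold binom_coef; simpl; field. Qed.

Lemma binom_coef_S s n :
  binom_coef s (S n) = binom_coef s n * (s + INR n) / INR (S n).
Proof.
  unfold binom_coef; simpl poch. rewrite fact_simpl, mult_INR.
  assert (INR (fact n) <> 0) by (apply not_0_INR, fact_neq_0).
  assert (INR (S n) <> 0) by (apply not_0_INR; lia).
  field; auto.
Qed.

Lemma poch_pos s n : 0 < s -> 0 < poch s n.
Proof.
  intros Hs; induction n; simpl; [lra|].
  apply Rmult_lt_0_compat; auto. pose proof (pos_INR n); lra.
Qed.

Lemma poch_Rabs_le s n : Rabs (poch s n) <= poch (Rabs s + 1) n.
Proof.
  induction n; simpl.
  - rewrite Rabs_R1; lra.
  - rewrite Rabs_mult. apply Rmult_le_compat; try apply Rabs_pos; auto.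
    pose proof (Rabs_triang s (INR n)).
    rewrite (Rabs_right (INR n)) in H by (apply Rle_ge, pos_INR). lra.
Qed.

Lemma binom_coef_pos s n : 0 < s -> 0 < binom_coef s n.
Proof.
  intros; unfold binom_coef. apply Rdiv_lt_0_compat.
  - apply poch_pos; auto.
  - apply lt_0_INR, lt_O_fact.
Qed.

Lemma binom_coef_Rabs_le s n : Rabs (binom_coef s n) <= binom_coef (Rabs s + 1) n.
Proof.
  unfold binom_coef. rewrite Rabs_div by apply not_0_INR, fact_neq_0.
  rewrite (Rabs_right (INR (fact n))) by (apply Rle_ge, pos_INR).
  apply Rmult_le_compat_r.
  - left; apply Rinv_0_lt_compat, lt_0_INR, lt_O_fact.
  - apply poch_Rabs_le.
Qed.

Lemma is_lim_seq_inv_INR_plus (c : R) : is_lim_seq (fun n => / (INR n + c)) 0.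
Proof.
  replace (Finite 0) with (Rbar_inv p_infty) by reflexivity.
  apply is_lim_seq_inv; [|discriminate].
  eapply is_lim_seq_plus; [apply is_lim_seq_INR | apply is_lim_seq_const | reflexivity].
Qed.

Lemma CV_radius_binom_coef_pos s : 0 < s -> CV_radius (binom_coef s) = 1.
Proof.
  intros Hs. replace 1 with (/ 1) by field.
  apply CV_radius_finite_DAlembert; [|lra|].
  - intros n; pose proof (binom_coef_pos s n Hs); lra.
  - apply is_lim_seq_ext with (u := fun n => 1 + (s - 1) * / (INR n + 1)).
    + intros n. rewrite binom_coef_S, S_INR.
      pose proof (binom_coef_pos s n Hs). pose proof (pos_INR n).
      replace (binom_coef s n * (s + INR n) / (INR n + 1) / binom_coef s n)
        with ((s + INR n) / (INR n + 1)) by (field; split; lra).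
      rewrite Rabs_right; [field; lra|].
      apply Rle_ge, Rdiv_le_0_compat; lra.
    + replace (Finite 1) with (Finite (1 + (s - 1) * 0)) by (f_equal; ring).
      apply is_lim_seq_plus'; [apply is_lim_seq_const|].
      exact (is_lim_seq_scal_l _ (s - 1) 0 (is_lim_seq_inv_INR_plus 1)).
Qed.

Lemma ex_series_Rabs_binom_coef s rho : Rabs rho < 1 ->
  ex_series (fun n => Rabs (binom_coef s n * rho ^ n)).
Proof.
  intros Hr.
  assert (Hs : 0 < Rabs s + 1) by (pose proof (Rabs_pos s); lra).
  assert (Hmaj : ex_series (fun n => Rabs (binom_coef (Rabs s + 1) n * rho ^ n))).
  { apply CV_disk_inside. rewrite CV_radius_binom_coef_pos by exact Hs. exact Hr. }
  apply (@ex_series_le R_AbsRing R_CompleteNormedModule) with (2 := Hmaj).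
  intros n. change (Rabs (Rabs (binom_coef s n * rho ^ n))
                    <= Rabs (binom_coef (Rabs s + 1) n * rho ^ n)).
  rewrite Rabs_Rabsolu, !Rabs_mult. apply Rmult_le_compat_r; [apply Rabs_pos|].
  rewrite (Rabs_right (binom_coef (Rabs s + 1) n)) by (apply Rle_ge; left; apply binom_coef_pos; exact Hs).
  apply binom_coef_Rabs_le.
Qed.

Lemma is_series_term_le (u : nat -> R) l n :
  (forall k, 0 <= u k) -> is_series u l -> u n <= l.
Proof.
  intros Hu Hl.
  apply Rle_trans with (sum_n u n).
  - destruct n; [rewrite sum_O; lra|].
    rewrite sum_Sn. change (u (S n) <= sum_n u n + u (S n)).
    enough (0 <= sum_n u n) by lra.
    clear Hl; induction n; [rewrite sum_O; auto|].
    rewrite sum_Sn. change (0 <= sum_n u n + u (S n)). specialize (Hu (S n)); lra.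
  - apply is_lim_seq_incr_compare; [exact Hl|].
    intros k. rewrite sum_Sn. change (sum_n u k <= sum_n u k + u (S k)).
    specialize (Hu (S k)); lra.
Qed.

Lemma CV_radius_binom_coef_gt s u :
  Rabs u < 1 -> Rbar_lt (Rabs u) (CV_radius (binom_coef s)).
Proof.
  intros Hu.
  set (r := (Rabs u + 1) / 2).
  assert (Hr : Rabs r < 1) by (unfold r; pose proof (Rabs_pos u); rewrite Rabs_right; lra).
  destruct (ex_series_Rabs_binom_coef s r Hr) as [M HM].
  assert (Hle : Rbar_le r (CV_radius (binom_coef s))).
  { apply (proj1 (CV_radius_bounded (binom_coef s))). exists M. intros n.
    apply (is_series_term_le (fun n => Rabs (binom_coef s n * r ^ n))); auto.
    intros; apply Rabs_pos. }
  destruct (CV_radius (binom_coef s)) as [c| |]; simpl in *; auto.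
  unfold r in Hle. pose proof (Rabs_pos u). lra.
Qed.

Lemma PS_derive_binom_coef s n :
  PS_derive (binom_coef s) n = binom_coef s n * (s + INR n).
Proof.
  unfold PS_derive. rewrite binom_coef_S.
  assert (INR (S n) <> 0) by (apply not_0_INR; lia). field; auto.
Qed.

(* The differential equation (1 - u) F' = s F of F(u) = (1 - u)^(-s). *)
Lemma binom_pseries_ode s u : Rabs u < 1 ->
  PSeries (PS_derive (binom_coef s)) u * (1 - u) = s * PSeries (binom_coef s) u.
Proof.
  intros Hu.
  set (d := PS_derive (binom_coef s)).
  assert (Hd : ex_pseries d u).
  { apply CV_radius_inside. unfold d; rewrite CV_radius_derive.
    apply CV_radius_binom_coef_gt; auto. }
  assert (Hd1 : ex_pseries (PS_incr_1 d) u).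
  { apply CV_radius_inside. rewrite CV_radius_incr_1. unfold d; rewrite CV_radius_derive.
    apply CV_radius_binom_coef_gt; auto. }
  replace (PSeries d u * (1 - u)) with (PSeries d u - u * PSeries d u) by ring.
  rewrite <- PSeries_incr_1, <- PSeries_minus, <- PSeries_scal by auto.
  apply PSeries_ext. intros n. unfold PS_minus, PS_scal, PS_incr_1, d.
  unfold scal, minus, plus, opp, mult; simpl; unfold mult; simpl.
  destruct n as [|n].
  - rewrite PS_derive_binom_coef, binom_coef_0. unfold zero; simpl. ring.
  - rewrite !PS_derive_binom_coef, binom_coef_S, !S_INR.
    assert (INR n + 1 <> 0) by (pose proof (pos_INR n); lra). field; auto.
Qed.

Lemma is_derive_zero_const (h : R -> R) lo hi x y :
  (forall v, lo < v < hi -> is_derive h v 0) -> lo < x < hi -> lo < y < hi -> h x = h y.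
Proof.
  intros Hd Hx Hy.
  assert (Hin : forall v, Rmin x y <= v <= Rmax x y -> lo < v < hi).
  { intros v [H1 H2]. split.
    - apply Rlt_le_trans with (Rmin x y); [apply Rmin_glb_lt; lra | exact H1].
    - apply Rle_lt_trans with (Rmax x y); [exact H2 | apply Rmax_lub_lt; lra]. }
  destruct (MVT_gen h x y (fun _ => 0)) as [c [_ Hc]].
  - intros v Hv. apply Hd, Hin. split; apply Rlt_le; apply Hv.
  - intros v Hv. apply continuity_pt_filterlim, (ex_derive_continuous h).
    eexists. apply Hd, Hin, Hv.
  - lra.
Qed.

Lemma Rpower_1_l y : Rpower 1 y = 1.
Proof. unfold Rpower. rewrite ln_1, Rmult_0_r. apply exp_0. Qed.

Lemma is_series_binomial s u : Rabs u < 1 ->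
  is_series (fun n => binom_coef s n * u ^ n) (Rpower (1 - u) (- s)).
Proof.
  intros Hu.
  set (h := fun v => PSeries (binom_coef s) v * Rpower (1 - v) s).
  (* h' = (1 - v)^(s-1) ((1 - v) F' - s F) vanishes by the differential equation. *)
  assert (Hder : forall v, -1 < v < 1 -> is_derive h v 0).
  { intros v Hv. assert (Hv1 : 0 < 1 - v) by lra.
    assert (Hvabs : Rabs v < 1) by (apply Rabs_def1; lra).
    assert (HP : is_derive (fun v => Rpower (1 - v) s) v (s * Rpower (1 - v) (s - 1) * (-1))).
    { replace (s * Rpower (1 - v) (s - 1) * (-1))
        with (scal (-1) (s * Rpower (1 - v) (s - 1)))
        by (unfold scal; simpl; unfold mult; simpl; ring).
      apply (is_derive_comp (fun w => Rpower w s) (fun v => 1 - v)).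
      - apply is_derive_Reals, derivable_pt_lim_power; auto.
      - auto_derive; auto. }
    replace 0 with (PSeries (PS_derive (binom_coef s)) v * Rpower (1 - v) s +
                    PSeries (binom_coef s) v * (s * Rpower (1 - v) (s - 1) * -1)).
    - apply (is_derive_mult (PSeries (binom_coef s)) (fun v => Rpower (1 - v) s)); auto.
      + apply is_derive_PSeries, CV_radius_binom_coef_gt; auto.
      + intros; unfold mult; simpl; apply Rmult_comm.
    - replace (Rpower (1 - v) s) with ((1 - v) * Rpower (1 - v) (s - 1)).
      + transitivity (Rpower (1 - v) (s - 1) *
          (PSeries (PS_derive (binom_coef s)) v * (1 - v) - s * PSeries (binom_coef s) v));
          [ring|].
        rewrite (binom_pseries_ode s v Hvabs). ring.
      + rewrite <- (Rpower_1 (1 - v)) at 1 by auto. rewrite <- Rpower_plus.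
        f_equal; ring. }
  apply Rabs_def2 in Hu.
  assert (Hh : h u = h 0) by (apply (is_derive_zero_const h (-1) 1); auto; lra).
  unfold h in Hh. rewrite PSeries_0, binom_coef_0, Rminus_0_r, Rpower_1_l in Hh.
  assert (Hu1 : 0 < 1 - u) by lra.
  assert (Hpow : 0 < Rpower (1 - u) s) by (unfold Rpower; apply exp_pos).
  replace (Rpower (1 - u) (- s)) with (PSeries (binom_coef s) u).
  - apply is_pseries_R, PSeries_correct, CV_radius_inside, CV_radius_binom_coef_gt.
    apply Rabs_def1; lra.
  - rewrite Rpower_Ropp. apply (Rmult_eq_reg_r (Rpower (1 - u) s)); [|lra].
    rewrite Hh. field. lra.
Qed.

(** * Improper integrals over (0,1) *)

Definition cutoff (n : nat) : R := / (INR n + 3).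

Lemma cutoff_bounds n : 0 < cutoff n <= 1/3.
Proof.
  unfold cutoff. pose proof (pos_INR n). split.
  - apply Rinv_0_lt_compat; lra.
  - apply Rle_trans with (/ 3); [apply Rinv_le_contravar|]; lra.
Qed.

Lemma cutoff_S n : cutoff (S n) < cutoff n.
Proof.
  unfold cutoff. rewrite S_INR. pose proof (pos_INR n).
  apply Rinv_lt_contravar; nra.
Qed.

Definition cont_open01 (f : R -> R) := forall t, 0 < t < 1 -> continuous f t.

Definition int_trunc (f : R -> R) (n : nat) : R := RInt f (cutoff n) (1 - cutoff n).

(* The improper Riemann integral over (0,1); [real] turns a divergent limit into 0. *)
Definition int01 (f : R -> R) : R := real (Lim_seq (int_trunc f)).

Definition integrable01 (f : R -> R) :=
  cont_open01 f /\ ex_finite_lim_seq (int_trunc f).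

Lemma cont_open01_ex_RInt f x y :
  cont_open01 f -> 0 < x < 1 -> 0 < y < 1 -> ex_RInt f x y.
Proof.
  intros Hf Hx Hy. apply (@ex_RInt_continuous R_CompleteNormedModule).
  intros z [Hz1 Hz2]. apply Hf. split.
  - apply Rlt_le_trans with (Rmin x y); [apply Rmin_glb_lt; lra | exact Hz1].
  - apply Rle_lt_trans with (Rmax x y); [exact Hz2 | apply Rmax_lub_lt; lra].
Qed.

Lemma cont_open01_mult f g :
  cont_open01 f -> cont_open01 g -> cont_open01 (fun t => f t * g t).
Proof. intros Hf Hg t Ht. apply (continuous_mult f g); auto. Qed.

Lemma cont_open01_scal k f : cont_open01 f -> cont_open01 (fun t => k * f t).
Proof. intros Hf t Ht. apply (continuous_scal_r k f), Hf, Ht. Qed.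

Section Truncated.

Variable f : R -> R.
Hypothesis Hf : cont_open01 f.

Lemma int_trunc_ex_RInt n m : ex_RInt f (cutoff n) (1 - cutoff m).
Proof.
  pose proof (cutoff_bounds n); pose proof (cutoff_bounds m).
  apply cont_open01_ex_RInt; auto; lra.
Qed.

Lemma int_trunc_plus g n : cont_open01 g ->
  int_trunc (fun t => f t + g t) n = int_trunc f n + int_trunc g n.
Proof.
  intros Hg. pose proof (cutoff_bounds n).
  apply (RInt_plus f g); apply cont_open01_ex_RInt; auto; lra.
Qed.

Lemma int_trunc_scal k n : int_trunc (fun t => k * f t) n = k * int_trunc f n.
Proof. apply (RInt_scal f), int_trunc_ex_RInt. Qed.

Lemma int_trunc_le g n : cont_open01 g -> (forall t, 0 < t < 1 -> f t <= g t) ->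
  int_trunc f n <= int_trunc g n.
Proof.
  intros Hg Hfg. pose proof (cutoff_bounds n).
  apply RInt_le; try (apply cont_open01_ex_RInt; auto; lra); [lra|].
  intros; apply Hfg; lra.
Qed.

Lemma int_trunc_incr : (forall t, 0 < t < 1 -> 0 <= f t) ->
  forall n, int_trunc f n <= int_trunc f (S n).
Proof.
  intros Hpos n. unfold int_trunc.
  pose proof (cutoff_bounds n); pose proof (cutoff_bounds (S n)); pose proof (cutoff_S n).
  assert (Hex : forall x y, 0 < x < 1 -> 0 < y < 1 -> ex_RInt f x y)
    by (intros; apply cont_open01_ex_RInt; auto).
  assert (Hnonneg : forall x y, 0 < x <= y -> y < 1 -> 0 <= RInt f x y).
  { intros x y Hxy Hy. apply RInt_ge_0; [lra | apply Hex; lra |].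
    intros; apply Hpos; lra. }
  assert (HC1 := RInt_Chasles f (cutoff (S n)) (cutoff n) (1 - cutoff (S n))).
  assert (HC2 := RInt_Chasles f (cutoff n) (1 - cutoff n) (1 - cutoff (S n))).
  unfold plus in HC1, HC2; simpl in HC1, HC2.
  rewrite <- HC1, <- HC2 by (apply Hex; lra).
  assert (0 <= RInt f (cutoff (S n)) (cutoff n)) by (apply Hnonneg; lra).
  assert (0 <= RInt f (1 - cutoff n) (1 - cutoff (S n))) by (apply Hnonneg; lra).
  lra.
Qed.

End Truncated.

Lemma is_lim_int_trunc f :
  ex_finite_lim_seq (int_trunc f) -> is_lim_seq (int_trunc f) (int01 f).
Proof.
  intros [l Hl]. unfold int01. rewrite (is_lim_seq_unique _ _ Hl). exact Hl.
Qed.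

Lemma int01_unique f (l : R) : is_lim_seq (int_trunc f) l -> int01 f = l.
Proof. intros Hl. unfold int01. rewrite (is_lim_seq_unique _ _ Hl). reflexivity. Qed.

Lemma integrable01_dominated f g M : cont_open01 f -> integrable01 g -> 0 <= M ->
  (forall t, 0 < t < 1 -> 0 <= g t) ->
  (forall t, 0 < t < 1 -> Rabs (f t) <= M * g t) -> integrable01 f.
Proof.
  intros Hf [Hg [lg Hlg]] HM Hg0 Hfg. split; [exact Hf|].
  set (h := fun t => f t + M * g t).
  assert (HMg : cont_open01 (fun t => M * g t)) by (apply cont_open01_scal, Hg).
  assert (Hh : cont_open01 h) by (intros t Ht; apply (continuous_plus f); auto).
  assert (Hfg' : forall t, 0 < t < 1 -> - (M * g t) <= f t <= M * g t)
    by (intros t Ht; apply Rabs_le_between, Hfg, Ht).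
  assert (Hhe : forall n, int_trunc h n = int_trunc f n + M * int_trunc g n).
  { intros n. unfold h. rewrite int_trunc_plus, int_trunc_scal; auto. }
  destruct (ex_finite_lim_seq_incr (int_trunc h) (2 * M * lg)) as [lh Hlh].
  - apply int_trunc_incr; [exact Hh|].
    intros t Ht. unfold h. specialize (Hfg' t Ht). lra.
  - intros n. rewrite Hhe.
    assert (int_trunc f n <= M * int_trunc g n).
    { rewrite <- int_trunc_scal by exact Hg. apply int_trunc_le; auto.
      intros t Ht. apply Hfg', Ht. }
    pose proof (is_lim_seq_incr_compare _ _ Hlg (int_trunc_incr g Hg Hg0) n). nra.
  - exists (lh + (- M) * lg).
    apply is_lim_seq_ext with (u := fun n => int_trunc h n + (- M) * int_trunc g n).
    + intros n; rewrite Hhe; ring.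
    + apply is_lim_seq_plus'; [exact Hlh | exact (is_lim_seq_scal_l _ (- M) lg Hlg)].
Qed.

Lemma int01_plus f g : integrable01 f -> integrable01 g ->
  int01 (fun t => f t + g t) = int01 f + int01 g.
Proof.
  intros [Hf Hfl] [Hg Hgl]. apply int01_unique.
  apply is_lim_seq_ext with (u := fun n => int_trunc f n + int_trunc g n).
  - intros; rewrite int_trunc_plus; auto.
  - apply is_lim_seq_plus'; apply is_lim_int_trunc; auto.
Qed.

Lemma int01_scal f k : integrable01 f -> int01 (fun t => k * f t) = k * int01 f.
Proof.
  intros [Hf Hfl]. apply int01_unique.
  apply is_lim_seq_ext with (u := fun n => k * int_trunc f n).
  - intros; rewrite int_trunc_scal; auto.
  - exact (is_lim_seq_scal_l _ k (int01 f) (is_lim_int_trunc f Hfl)).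
Qed.

Lemma int01_le f g : integrable01 f -> integrable01 g ->
  (forall t, 0 < t < 1 -> f t <= g t) -> int01 f <= int01 g.
Proof.
  intros [Hf Hfl] [Hg Hgl] Hfg.
  assert (H : Rbar_le (int01 f) (int01 g)).
  { apply (is_lim_seq_le (int_trunc f) (int_trunc g)); try apply is_lim_int_trunc; auto.
    intros; apply int_trunc_le; auto. }
  exact H.
Qed.

Lemma int01_ext f g : (forall t, 0 < t < 1 -> f t = g t) -> int01 f = int01 g.
Proof.
  intros H. unfold int01. f_equal. apply Lim_seq_ext. intros n.
  pose proof (cutoff_bounds n). apply RInt_ext. intros x Hx.
  rewrite Rmin_left, Rmax_right in Hx by lra. apply H; lra.
Qed.

(** * The Beta integral *)

Lemma exp_le_compat x y : x <= y -> exp x <= exp y.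
Proof. intros [H|H]; [left; apply exp_increasing; auto | subst; lra]. Qed.

Lemma ln_le_0 t : 0 < t <= 1 -> ln t <= 0.
Proof. intros Ht. rewrite <- ln_1. apply ln_le; lra. Qed.

Lemma exp_mul_ln_le_1 x t : 0 <= x -> 0 < t <= 1 -> exp (x * ln t) <= 1.
Proof.
  intros Hx Ht. rewrite <- exp_0. apply exp_le_compat.
  pose proof (ln_le_0 t Ht). nra.
Qed.

Lemma exp_mul_ln_pred x t : 0 < t -> exp (x * ln t) = t * exp ((x - 1) * ln t).
Proof.
  intros Ht. replace (x * ln t) with (ln t + (x - 1) * ln t) by ring.
  rewrite exp_plus, exp_ln; auto.
Qed.

Lemma exp_mul_ln_le_half y t : 1/2 <= t <= 1 -> exp (y * ln t) <= exp (Rabs y * ln 2).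
Proof.
  intros Ht. apply exp_le_compat.
  assert (Hl : - ln 2 <= ln t).
  { rewrite <- ln_Rinv by lra. apply ln_le; [apply Rinv_0_lt_compat; lra|].
    replace (/ 2) with (1/2) by field. lra. }
  pose proof (ln_le_0 t ltac:(lra)).
  destruct (Rle_dec 0 y); [rewrite Rabs_right | rewrite Rabs_left]; nra.
Qed.

Lemma is_lim_seq_exp_mul_ln_cutoff y :
  0 < y -> is_lim_seq (fun n => exp (y * ln (cutoff n))) 0.
Proof.
  intros Hy.
  assert (Hln : is_lim_seq (fun n => ln (INR n + 3)) p_infty).
  { apply (is_lim_comp_seq ln (fun n => INR n + 3) p_infty p_infty).
    - apply is_lim_ln_p.
    - exists 0%nat; intros; discriminate.
    - eapply is_lim_seq_plus; [apply is_lim_seq_INR | apply is_lim_seq_const | reflexivity]. }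
  (* [exp (-y L) <= 1 / (1 + y L)] with [L = ln (n + 3) -> +oo]. *)
  apply is_lim_seq_le_le with (u := fun _ => 0) (w := fun n => / (1 + y * ln (INR n + 3))).
  - intros n. unfold cutoff. pose proof (pos_INR n).
    rewrite ln_Rinv by lra.
    assert (0 <= ln (INR n + 3)) by (rewrite <- ln_1; apply ln_le; lra).
    split; [left; apply exp_pos|].
    replace (y * - ln (INR n + 3)) with (- (y * ln (INR n + 3))) by ring.
    rewrite exp_Ropp. apply Rinv_le_contravar; [nra | apply exp_ineq1_le].
  - apply is_lim_seq_const.
  - replace (Finite 0) with (Rbar_inv p_infty) by reflexivity.
    apply is_lim_seq_inv; [|discriminate].
    eapply is_lim_seq_plus; [apply is_lim_seq_const| |].
    + eapply is_lim_seq_mult; [apply is_lim_seq_const | exact Hln |].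
      apply is_Rbar_mult_sym, is_Rbar_mult_p_infty_pos. simpl; lra.
    + reflexivity.
Qed.

Definition beta_weight (x c t : R) : R :=
  exp ((x - 1) * ln t) * exp ((c - 1) * ln (1 - t)).

Lemma beta_weight_pos x c t : 0 < beta_weight x c t.
Proof. unfold beta_weight. apply Rmult_lt_0_compat; apply exp_pos. Qed.

Lemma beta_weight_cont x c : cont_open01 (beta_weight x c).
Proof.
  intros t Ht. apply (@ex_derive_continuous R_AbsRing R_NormedModule).
  unfold beta_weight. auto_derive. lra.
Qed.

Lemma is_RInt_beta_left x e1 e2 : 0 < x -> 0 < e1 -> 0 < e2 ->
  is_RInt (fun t => exp ((x - 1) * ln t)) e1 e2
    (exp (x * ln e2) / x - exp (x * ln e1) / x).
Proof.
  intros Hx H1 H2.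
  assert (Hm : forall t, Rmin e1 e2 <= t <= Rmax e1 e2 -> 0 < t).
  { intros t [Ht _]. apply Rlt_le_trans with (Rmin e1 e2); [apply Rmin_glb_lt|]; lra. }
  apply (is_RInt_derive (fun t => exp (x * ln t) / x)).
  - intros t Ht. specialize (Hm t Ht). auto_derive; auto.
    rewrite (exp_mul_ln_pred x t) by auto. field. split; lra.
  - intros t Ht. specialize (Hm t Ht).
    apply (@ex_derive_continuous R_AbsRing R_NormedModule). auto_derive. auto.
Qed.

Lemma is_RInt_beta_right c e1 e2 : 0 < c -> e1 < 1 -> e2 < 1 ->
  is_RInt (fun t => exp ((c - 1) * ln (1 - t))) e1 e2
    (exp (c * ln (1 - e1)) / c - exp (c * ln (1 - e2)) / c).
Proof.
  intros Hc H1 H2.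
  assert (Hm : forall t, Rmin e1 e2 <= t <= Rmax e1 e2 -> 0 < 1 - t).
  { intros t [_ Ht]. enough (Rmax e1 e2 < 1) by lra. apply Rmax_lub_lt; lra. }
  replace (exp (c * ln (1 - e1)) / c - exp (c * ln (1 - e2)) / c) with
    (minus ((fun t => - exp (c * ln (1 - t)) / c) e2)
           ((fun t => - exp (c * ln (1 - t)) / c) e1))
    by (unfold minus, plus, opp; simpl; field; lra).
  apply (is_RInt_derive (fun t => - exp (c * ln (1 - t)) / c)).
  - intros t Ht. specialize (Hm t Ht). auto_derive; auto.
    replace (1 + - t) with (1 - t) by ring. rewrite (exp_mul_ln_pred c (1 - t)) by auto.
    field. split; lra.
  - intros t Ht. specialize (Hm t Ht).
    apply (@ex_derive_continuous R_AbsRing R_NormedModule). auto_derive. auto.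
Qed.

Lemma beta_weight_le x c t : 0 < t < 1 ->
  beta_weight x c t <= exp (Rabs (c - 1) * ln 2) * exp ((x - 1) * ln t)
                     + exp (Rabs (x - 1) * ln 2) * exp ((c - 1) * ln (1 - t)).
Proof.
  intros Ht. unfold beta_weight.
  pose proof (exp_pos ((x - 1) * ln t)); pose proof (exp_pos ((c - 1) * ln (1 - t))).
  pose proof (exp_pos (Rabs (c - 1) * ln 2)); pose proof (exp_pos (Rabs (x - 1) * ln 2)).
  destruct (Rle_dec t (1/2)).
  - pose proof (exp_mul_ln_le_half (c - 1) (1 - t) ltac:(lra)). nra.
  - pose proof (exp_mul_ln_le_half (x - 1) t ltac:(lra)). nra.
Qed.

Lemma beta_weight_integrable01 x c : 0 < x -> 0 < c -> integrable01 (beta_weight x c).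
Proof.
  intros Hx Hc. split; [apply beta_weight_cont|].
  set (K1 := exp (Rabs (c - 1) * ln 2)). set (K2 := exp (Rabs (x - 1) * ln 2)).
  apply (ex_finite_lim_seq_incr _ (K1 / x + K2 / c)).
  { apply int_trunc_incr; [apply beta_weight_cont|]. intros; left; apply beta_weight_pos. }
  intros n. pose proof (cutoff_bounds n). set (e := cutoff n) in *.
  set (F := fun t => K1 * exp ((x - 1) * ln t) + K2 * exp ((c - 1) * ln (1 - t))).
  assert (HI : is_RInt F e (1 - e)
                 (K1 * (exp (x * ln (1 - e)) / x - exp (x * ln e) / x) +
                  K2 * (exp (c * ln (1 - e)) / c - exp (c * ln (1 - (1 - e))) / c))).
  { apply (is_RInt_plus (fun t => K1 * exp ((x - 1) * ln t))
                        (fun t => K2 * exp ((c - 1) * ln (1 - t)))).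
    - apply (is_RInt_scal (fun t => exp ((x - 1) * ln t))), is_RInt_beta_left; lra.
    - apply (is_RInt_scal (fun t => exp ((c - 1) * ln (1 - t)))), is_RInt_beta_right; lra. }
  unfold int_trunc. fold e. apply Rle_trans with (RInt F e (1 - e)).
  { apply RInt_le; [lra | apply cont_open01_ex_RInt; try lra; apply beta_weight_cont
                   | eexists; exact HI |].
    intros t Ht. apply beta_weight_le. lra. }
  rewrite (is_RInt_unique _ _ _ _ HI). replace (1 - (1 - e)) with e by ring.
  assert (exp (x * ln (1 - e)) <= 1) by (apply exp_mul_ln_le_1; lra).
  assert (exp (c * ln (1 - e)) <= 1) by (apply exp_mul_ln_le_1; lra).
  pose proof (exp_pos (x * ln e)). pose proof (exp_pos (c * ln e)).
  assert (0 < K1) by apply exp_pos. assert (0 < K2) by apply exp_pos.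
  assert (0 < / x) by (apply Rinv_0_lt_compat; lra).
  assert (0 < / c) by (apply Rinv_0_lt_compat; lra).
  assert (K1 * (exp (x * ln (1 - e)) / x - exp (x * ln e) / x) <= K1 / x).
  { apply Rmult_le_compat_l; [lra|]. unfold Rdiv. nra. }
  assert (K2 * (exp (c * ln (1 - e)) / c - exp (c * ln e) / c) <= K2 / c).
  { apply Rmult_le_compat_l; [lra|]. unfold Rdiv. nra. }
  lra.
Qed.

Lemma beta_int01_pos a c : 0 < a -> 0 < c -> 0 < int01 (beta_weight a c).
Proof.
  intros Ha Hc. destruct (beta_weight_integrable01 a c Ha Hc) as [Hw Hl].
  pose proof (cutoff_bounds 0).
  apply Rlt_le_trans with (int_trunc (beta_weight a c) 0).
  - apply RInt_gt_0; [lra | intros; apply beta_weight_pos |].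
    intros x Hx. apply beta_weight_cont. lra.
  - apply is_lim_seq_incr_compare; [apply is_lim_int_trunc, Hl|].
    apply int_trunc_incr; [exact Hw|]. intros; left; apply beta_weight_pos.
Qed.

Section BetaRecurrence.

Variables x c : R.
Hypotheses (Hx : 0 < x) (Hc : 0 < c).

Let F (t : R) : R := exp (x * ln t) * exp (c * ln (1 - t)).

(* Integration by parts: [F' = x w(x, c) - (x + c) w(x + 1, c)]. *)
Lemma int_trunc_beta_rec n :
  x * int_trunc (beta_weight x c) n - (x + c) * int_trunc (beta_weight (x + 1) c) n
  = F (1 - cutoff n) - F (cutoff n).
Proof.
  pose proof (cutoff_bounds n). set (e := cutoff n) in *.
  assert (HF : is_RInt (fun t => x * beta_weight x c t - (x + c) * beta_weight (x + 1) c t)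
                 e (1 - e) (minus (F (1 - e)) (F e))).
  { apply (is_RInt_derive F).
    - intros t Ht. rewrite Rmin_left, Rmax_right in Ht by lra.
      unfold F, beta_weight. auto_derive; [lra|].
      replace (x + 1 - 1) with x by ring. replace (1 + - t) with (1 - t) by ring.
      rewrite (exp_mul_ln_pred x t), (exp_mul_ln_pred c (1 - t)) by lra.
      field. lra.
    - intros t Ht. rewrite Rmin_left, Rmax_right in Ht by lra.
      apply (@ex_derive_continuous R_AbsRing R_NormedModule). unfold beta_weight.
      auto_derive. lra. }
  assert (Hex : forall y, ex_RInt (beta_weight y c) e (1 - e))
    by (intros; apply int_trunc_ex_RInt, beta_weight_cont).
  unfold int_trunc. fold e.
  rewrite <- (RInt_scal (beta_weight x c)), <- (RInt_scal (beta_weight (x + 1) c)) by auto.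
  change (F (1 - e) - F e) with (minus (F (1 - e)) (F e)).
  rewrite <- (is_RInt_unique _ _ _ _ HF).
  symmetry. apply (RInt_minus (fun t => x * beta_weight x c t)
                              (fun t => (x + c) * beta_weight (x + 1) c t));
    apply (ex_RInt_scal (beta_weight _ c)); auto.
Qed.

Lemma is_lim_seq_beta_boundary :
  is_lim_seq (fun n => F (1 - cutoff n) - F (cutoff n)) 0.
Proof.
  assert (Hsq : forall y z e, 0 < y -> 0 <= z -> 0 < e <= 1/3 ->
                  0 <= exp (z * ln (1 - e)) * exp (y * ln e) <= exp (y * ln e)).
  { intros y z e Hy Hz He. pose proof (exp_pos (y * ln e)).
    pose proof (exp_pos (z * ln (1 - e))).
    assert (exp (z * ln (1 - e)) <= 1) by (apply exp_mul_ln_le_1; lra). nra. }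
  replace (Finite 0) with (Finite (0 - 0)) by (f_equal; ring).
  apply is_lim_seq_minus'.
  - apply is_lim_seq_le_le with (u := fun _ => 0)
      (w := fun n => exp (c * ln (cutoff n))); [| apply is_lim_seq_const |].
    + intros n. unfold F. replace (1 - (1 - cutoff n)) with (cutoff n) by ring.
      apply Hsq; try lra. apply cutoff_bounds.
    + apply is_lim_seq_exp_mul_ln_cutoff, Hc.
  - apply is_lim_seq_le_le with (u := fun _ => 0)
      (w := fun n => exp (x * ln (cutoff n))); [| apply is_lim_seq_const |].
    + intros n. unfold F. rewrite Rmult_comm.
      apply Hsq; try lra. apply cutoff_bounds.
    + apply is_lim_seq_exp_mul_ln_cutoff, Hx.
Qed.

Lemma beta_int01_rec :
  x * int01 (beta_weight x c) = (x + c) * int01 (beta_weight (x + 1) c).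
Proof.
  assert (Hlim : is_lim_seq
            (fun n => x * int_trunc (beta_weight x c) n
                      - (x + c) * int_trunc (beta_weight (x + 1) c) n)
            (x * int01 (beta_weight x c) - (x + c) * int01 (beta_weight (x + 1) c))).
  { apply is_lim_seq_minus'.
    - apply (is_lim_seq_scal_l _ x (int01 (beta_weight x c))), is_lim_int_trunc.
      apply beta_weight_integrable01; auto.
    - apply (is_lim_seq_scal_l _ (x + c) (int01 (beta_weight (x + 1) c))), is_lim_int_trunc.
      apply beta_weight_integrable01; lra. }
  apply (is_lim_seq_ext _ _ _ int_trunc_beta_rec) in Hlim.
  assert (H := is_lim_seq_unique _ _ Hlim).
  rewrite (is_lim_seq_unique _ _ is_lim_seq_beta_boundary) in H.
  injection H; lra.
Qed.

End BetaRecurrence.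

Lemma beta_int01_shift a c n : 0 < a -> 0 < c ->
  int01 (beta_weight (a + INR n) c) / int01 (beta_weight a c) = poch a n / poch (a + c) n.
Proof.
  intros Ha Hc. pose proof (beta_int01_pos a c Ha Hc). induction n.
  - simpl. rewrite Rplus_0_r. field. lra.
  - rewrite S_INR. simpl poch. pose proof (pos_INR n).
    pose proof (beta_int01_rec (a + INR n) c ltac:(lra) Hc) as Hr.
    replace (a + INR n + 1) with (a + (INR n + 1)) in Hr by ring.
    assert (0 < poch a n) by (apply poch_pos; lra).
    assert (0 < poch (a + c) n) by (apply poch_pos; lra).
    replace (int01 (beta_weight (a + (INR n + 1)) c))
      with ((a + INR n) / (a + INR n + c) * int01 (beta_weight (a + INR n) c))
      by (apply (Rmult_eq_reg_l (a + INR n + c)); [rewrite <- Hr; field|]; lra).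
    unfold Rdiv in *. rewrite Rmult_assoc, IHn. field. repeat split; lra.
Qed.

(** * Expectations *)

Definition Cont (f : R -> R) := forall t, continuous f t.

Lemma Cont_bounded f a b : Cont f -> exists M, forall t, a <= t <= b -> Rabs (f t) <= M.
Proof.
  intros Hf. destruct (Rle_dec a b) as [Hab|Hab]; [|exists 0; intros; lra].
  destruct (continuity_ab_maj (fun t => Rabs (f t)) a b Hab) as [m [Hm _]].
  - intros c _. apply continuity_pt_filterlim.
    apply (continuous_comp f Rabs); [apply Hf | apply continuous_Rabs].
  - exists (Rabs (f m)); auto.
Qed.

Lemma Cont_const k : Cont (fun _ => k).
Proof. intros t; apply continuous_const. Qed.

Lemma Cont_plus f g : Cont f -> Cont g -> Cont (fun t => f t + g t).
Proof. intros Hf Hg t; apply (continuous_plus f g); auto. Qed.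

Lemma Cont_mult f g : Cont f -> Cont g -> Cont (fun t => f t * g t).
Proof. intros Hf Hg t; apply (continuous_mult f g); auto. Qed.

Lemma Cont_scal k f : Cont f -> Cont (fun t => k * f t).
Proof. intros Hf; apply Cont_mult; auto; apply Cont_const. Qed.

Lemma Cont_opp f : Cont f -> Cont (fun t => - f t).
Proof. intros Hf t; apply (continuous_opp f); auto. Qed.

Lemma Cont_minus f g : Cont f -> Cont g -> Cont (fun t => f t - g t).
Proof. intros Hf Hg. apply Cont_plus; [|apply Cont_opp]; auto. Qed.

Lemma Cont_comp f g : Cont f -> Cont g -> Cont (fun t => g (f t)).
Proof. intros Hf Hg t. apply (continuous_comp f g); auto. Qed.

Lemma Cont_dilate f s : Cont f -> Cont (fun t => f (s * t)).
Proof.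
  intros Hf. apply (Cont_comp (fun t => s * t) f); [|exact Hf].
  intros t. apply (@ex_derive_continuous R_AbsRing R_NormedModule). auto_derive. auto.
Qed.

Lemma Cont_pow n : Cont (fun t => t ^ n).
Proof.
  intros t. apply (@ex_derive_continuous R_AbsRing R_NormedModule). auto_derive; auto.
Qed.

Lemma Cont_Rpower g y : Cont g -> (forall t, 0 < g t) -> Cont (fun t => Rpower (g t) y).
Proof.
  intros Hg Hp t. unfold Rpower. apply (continuous_comp g (fun x => exp (y * ln x))).
  - apply Hg.
  - apply (@ex_derive_continuous R_AbsRing R_NormedModule). auto_derive. apply Hp.
Qed.

Lemma Cont_dilate_unif f s0 (eps : posreal) : Cont f ->
  exists d : posreal, forall s t, Rabs (s - s0) < d -> 0 <= t <= 1 ->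
    Rabs (f (s * t) - f (s0 * t)) < eps.
Proof.
  intros Hf. set (A := Rabs s0 + 1).
  destruct (unifcont_normed_1d f (- A) A (fun x _ => Hf x) eps) as [d Hd].
  assert (Hd1 : 0 < Rmin d 1) by (apply Rmin_pos; [apply cond_pos | lra]).
  exists (mkposreal _ Hd1). intros s t Hs Ht. simpl in Hs.
  assert (Hsd : Rabs (s - s0) < d) by (eapply Rlt_le_trans; [apply Hs | apply Rmin_l]).
  assert (Hs1 : Rabs (s - s0) < 1) by (eapply Rlt_le_trans; [apply Hs | apply Rmin_r]).
  assert (Hst : Rabs (s * t - s0 * t) <= Rabs (s - s0)).
  { replace (s * t - s0 * t) with ((s - s0) * t) by ring.
    rewrite Rabs_mult, (Rabs_right t) by lra.
    pose proof (Rabs_pos (s - s0)). nra. }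
  assert (Hin : forall u, Rabs u <= Rabs s0 * t + Rabs (s - s0) * t -> - A <= u <= A).
  { intros u Hu. apply Rabs_le_between. unfold A.
    pose proof (Rabs_pos s0). pose proof (Rabs_pos (s - s0)). nra. }
  assert (H1 : - A <= s0 * t <= A).
  { apply Hin. rewrite Rabs_mult, (Rabs_right t) by lra. pose proof (Rabs_pos (s - s0)). nra. }
  assert (H2 : - A <= s * t <= A).
  { apply Hin. replace (s * t) with (s0 * t + (s - s0) * t) by ring.
    eapply Rle_trans; [apply Rabs_triang|].
    rewrite !Rabs_mult, (Rabs_right t) by lra. lra. }
  apply (Hd (s0 * t) (s * t) H1 H2). change (Rabs (s * t - s0 * t) < d). lra.
Qed.

(* An expectation functional: integration against a probability measure on [0,1],
   applied to functions continuous on all of R. *)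
Record Expectation (E : (R -> R) -> R) : Prop := {
  expect_plus : forall f g, Cont f -> Cont g -> E (fun t => f t + g t) = E f + E g;
  expect_scal : forall f k, Cont f -> E (fun t => k * f t) = k * E f;
  expect_le : forall f g, Cont f -> Cont g ->
    (forall t, 0 <= t <= 1 -> f t <= g t) -> E f <= E g;
  expect_one : E (fun _ => 1) = 1;
  expect_ext : forall f g, (forall t, 0 <= t <= 1 -> f t = g t) -> E f = E g }.

Section ExpectationTheory.

Variable E : (R -> R) -> R.
Hypothesis HE : Expectation E.

Lemma expect_const k : E (fun _ => k) = k.
Proof.
  transitivity (E (fun _ => k * 1)); [apply (expect_ext E HE); intros; ring|].
  rewrite (expect_scal E HE (fun _ => 1)) by apply Cont_const.
  rewrite (expect_one E HE); ring.
Qed.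

Lemma expect_opp f : Cont f -> E (fun t => - f t) = - E f.
Proof.
  intros Hf. replace (- E f) with (-1 * E f) by ring.
  rewrite <- (expect_scal E HE) by exact Hf.
  apply (expect_ext E HE); intros; ring.
Qed.

Lemma expect_minus f g : Cont f -> Cont g -> E (fun t => f t - g t) = E f - E g.
Proof.
  intros Hf Hg. unfold Rminus.
  rewrite (expect_plus E HE) by (auto; apply Cont_opp; auto).
  rewrite expect_opp; auto.
Qed.

Lemma expect_dist f g eta : Cont f -> Cont g ->
  (forall t, 0 <= t <= 1 -> Rabs (f t - g t) <= eta) -> Rabs (E f - E g) <= eta.
Proof.
  intros Hf Hg H. rewrite <- expect_minus by auto.
  assert (Hfg : Cont (fun t => f t - g t)) by (apply Cont_minus; auto).
  apply Rabs_le. split.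
  - rewrite <- (expect_const (- eta)). apply (expect_le E HE); [apply Cont_const | auto |].
    intros t Ht. specialize (H t Ht). apply Rabs_le_between in H. lra.
  - rewrite <- (expect_const eta). apply (expect_le E HE); [auto | apply Cont_const |].
    intros t Ht. specialize (H t Ht). apply Rabs_le_between in H. lra.
Qed.

Lemma expect_dilate_cont f : Cont f -> Cont (fun s => E (fun t => f (s * t))).
Proof.
  intros Hf s0. apply filterlim_locally. intros eps.
  destruct (Cont_dilate_unif f s0 (pos_div_2 eps) Hf) as [d Hd].
  exists d. intros s Hs. change (Rabs (s - s0) < d) in Hs.
  change (Rabs (E (fun t => f (s * t)) - E (fun t => f (s0 * t))) < eps).
  apply Rle_lt_trans with (eps / 2); [|destruct eps; simpl; lra].
  apply expect_dist; try apply Cont_dilate; auto.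
  intros t Ht. left. apply Hd; auto.
Qed.

Lemma expect_pos f : Cont f -> (forall t, 0 <= t <= 1 -> 0 < f t) -> 0 < E f.
Proof.
  intros Hf Hp.
  destruct (continuity_ab_min f 0 1 ltac:(lra)) as [t0 [Ht0 Ht0r]].
  { intros c _. apply continuity_pt_filterlim, Hf. }
  apply Rlt_le_trans with (E (fun _ => f t0)); [rewrite expect_const; auto|].
  apply (expect_le E HE); auto. apply Cont_const.
Qed.

End ExpectationTheory.

(** * Beta laws and their products *)

Definition beta_expect (a c : R) (f : R -> R) : R :=
  int01 (fun t => f t * beta_weight a c t) / int01 (beta_weight a c).

Lemma integrable01_mult_beta a c f : 0 < a -> 0 < c -> Cont f ->
  integrable01 (fun t => f t * beta_weight a c t).
Proof.
  intros Ha Hc Hf. destruct (Cont_bounded f 0 1 Hf) as [M HM].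
  assert (Hfw : cont_open01 (fun t => f t * beta_weight a c t)).
  { apply cont_open01_mult; [intros t _; apply Hf | apply beta_weight_cont]. }
  apply (integrable01_dominated _ (beta_weight a c) (Rabs M) Hfw).
  - apply beta_weight_integrable01; auto.
  - apply Rabs_pos.
  - intros; left; apply beta_weight_pos.
  - intros t Ht. rewrite Rabs_mult, (Rabs_right (beta_weight a c t))
      by (left; apply beta_weight_pos).
    apply Rmult_le_compat_r; [left; apply beta_weight_pos|].
    eapply Rle_trans; [apply HM; lra | apply RRle_abs].
Qed.

Lemma beta_expect_Expectation a c : 0 < a -> 0 < c -> Expectation (beta_expect a c).
Proof.
  intros Ha Hc. pose proof (beta_int01_pos a c Ha Hc) as HB.
  assert (Hi := integrable01_mult_beta a c).
  unfold beta_expect. constructor.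
  - intros f g Hf Hg. rewrite <- Rdiv_plus_distr, <- int01_plus by auto.
    f_equal. apply int01_ext; intros; ring.
  - intros f k Hf. unfold Rdiv. rewrite <- Rmult_assoc, <- int01_scal by auto.
    f_equal. apply int01_ext; intros; ring.
  - intros f g Hf Hg Hfg. unfold Rdiv.
    apply Rmult_le_compat_r; [left; apply Rinv_0_lt_compat, HB|].
    apply int01_le; auto. intros t Ht.
    apply Rmult_le_compat_r; [left; apply beta_weight_pos | apply Hfg; lra].
  - rewrite (int01_ext _ (beta_weight a c)) by (intros; ring). field; lra.
  - intros f g Hfg. f_equal. apply int01_ext. intros t Ht. rewrite Hfg; auto; lra.
Qed.

(* The law of the product [S T] of independent variables with laws [E1] and [E2]. *)
Definition expect_prod (E1 E2 : (R -> R) -> R) (f : R -> R) : R :=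
  E1 (fun s => E2 (fun t => f (s * t))).

Lemma expect_prod_Expectation E1 E2 :
  Expectation E1 -> Expectation E2 -> Expectation (expect_prod E1 E2).
Proof.
  intros H1 H2. unfold expect_prod.
  assert (Hst : forall s t, 0 <= s <= 1 -> 0 <= t <= 1 -> 0 <= s * t <= 1)
    by (intros; split; nra).
  constructor.
  - intros f g Hf Hg. rewrite <- (expect_plus E1 H1) by (apply expect_dilate_cont; auto).
    apply (expect_ext E1 H1). intros s _.
    apply (expect_plus E2 H2); apply Cont_dilate; auto.
  - intros f k Hf. rewrite <- (expect_scal E1 H1) by (apply expect_dilate_cont; auto).
    apply (expect_ext E1 H1). intros s _.
    apply (expect_scal E2 H2); apply Cont_dilate; auto.
  - intros f g Hf Hg Hfg. apply (expect_le E1 H1); try apply expect_dilate_cont; auto.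
    intros s Hs. apply (expect_le E2 H2); try apply Cont_dilate; auto.
  - transitivity (E1 (fun _ => 1)); [|apply (expect_one E1 H1)].
    apply (expect_ext E1 H1). intros; apply (expect_one E2 H2).
  - intros f g Hfg. apply (expect_ext E1 H1). intros s Hs.
    apply (expect_ext E2 H2). auto.
Qed.

Lemma dirac1_Expectation : Expectation (fun f => f 1).
Proof.
  constructor; auto.
  - intros f g _ _ H; apply H; lra.
  - intros f g H; apply H; lra.
Qed.

Definition beta_params (m : nat) (a b : nat -> R) :=
  forall k, (k < m)%nat -> 0 < a k < b k.

(* The law of a product of independent Beta(a_k, b_k - a_k) variables, k < m. *)
Fixpoint beta_prod_expect (a b : nat -> R) (m : nat) : (R -> R) -> R :=
  match m with
  | O => fun f => f 1
  | S m' => expect_prod (beta_expect (a m') (b m' - a m')) (beta_prod_expect a b m')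
  end.

Lemma beta_params_S m a b : beta_params (S m) a b ->
  beta_params m a b /\ 0 < a m /\ 0 < b m - a m.
Proof.
  intros H. split; [intros k Hk; apply H; lia|]. destruct (H m ltac:(lia)). lra.
Qed.

Lemma beta_params_shift m a b d : 0 <= d -> beta_params m a b ->
  beta_params m (fun k => a k + d) (fun k => b k + d).
Proof. intros Hd H k Hk. specialize (H k Hk). lra. Qed.

Lemma beta_prod_expect_Expectation a b m :
  beta_params m a b -> Expectation (beta_prod_expect a b m).
Proof.
  induction m as [|m IHm]; intros H; [apply dirac1_Expectation|].
  destruct (beta_params_S m a b H) as [Hm [Ha Hc]].
  apply expect_prod_Expectation; [apply beta_expect_Expectation | apply IHm]; auto.
Qed.

Lemma pow_exp_ln s n : 0 < s -> s ^ n = exp (INR n * ln s).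
Proof. intros Hs. rewrite <- ln_pow by exact Hs. rewrite exp_ln; [reflexivity | apply pow_lt, Hs]. Qed.

Lemma beta_expect_pow a c n : 0 < a -> 0 < c ->
  beta_expect a c (fun t => t ^ n) = poch a n / poch (a + c) n.
Proof.
  intros Ha Hc. unfold beta_expect. rewrite <- beta_int01_shift by auto. f_equal.
  apply int01_ext. intros t Ht. unfold beta_weight. rewrite pow_exp_ln by lra.
  rewrite <- Rmult_assoc, <- exp_plus. f_equal. f_equal. ring.
Qed.

Lemma beta_prod_expect_pow a b m n : beta_params m a b ->
  beta_prod_expect a b m (fun t => t ^ n) = prodR m (fun k => poch (a k) n / poch (b k) n).
Proof.
  induction m as [|m IHm]; intros H; [apply pow1|].
  destruct (beta_params_S m a b H) as [Hm [Ha Hc]].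
  assert (HN := beta_prod_expect_Expectation a b m Hm).
  assert (HB := beta_expect_Expectation (a m) (b m - a m) Ha Hc).
  simpl. unfold expect_prod. rewrite <- IHm by exact Hm.
  transitivity (beta_expect (a m) (b m - a m)
                  (fun s => beta_prod_expect a b m (fun t => t ^ n) * s ^ n)).
  - apply (expect_ext _ HB). intros s _.
    rewrite Rmult_comm, <- (expect_scal _ HN) by apply Cont_pow.
    apply (expect_ext _ HN). intros; rewrite Rpow_mult_distr; ring.
  - rewrite (expect_scal _ HB), beta_expect_pow by (auto || apply Cont_pow).
    replace (a m + (b m - a m)) with (b m) by ring. reflexivity.
Qed.

(* [t ^ d] extended by [0] on [t <= 0], so that it is continuous on R for [d > 0]
   ([Rpower 0 d] is [1] because [ln 0 = 0]). *)
Definition rpow0 (d t : R) : R := if Rlt_dec 0 t then exp (d * ln t) else 0.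

Lemma rpow0_cont_at_0 d : 0 < d -> continuous (rpow0 d) 0.
Proof.
  intros Hd. apply filterlim_locally. intros eps.
  exists (mkposreal _ (exp_pos (ln eps / d))). intros y Hy.
  change (Rabs (y - 0) < exp (ln eps / d)) in Hy. rewrite Rminus_0_r in Hy.
  change (Rabs (rpow0 d y - rpow0 d 0) < eps). unfold rpow0.
  destruct (Rlt_dec 0 0) as [|_]; [lra|]. rewrite Rminus_0_r.
  destruct (Rlt_dec 0 y) as [Hy0|_]; [|rewrite Rabs_R0; apply cond_pos].
  rewrite Rabs_right in Hy by lra. rewrite Rabs_right by (left; apply exp_pos).
  rewrite <- (exp_ln eps) by apply cond_pos. apply exp_increasing.
  assert (ln y < ln eps / d) by (rewrite <- (ln_exp (ln eps / d)); apply ln_increasing; auto).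
  apply (Rmult_lt_compat_l d) in H; [|exact Hd].
  replace (d * (ln eps / d)) with (ln eps) in H by (field; lra). exact H.
Qed.

Lemma rpow0_Cont d : 0 < d -> Cont (rpow0 d).
Proof.
  intros Hd t. destruct (Rtotal_order t 0) as [Ht|[->|Ht]].
  - apply (continuous_ext_loc _ (fun _ => 0)); [|apply continuous_const].
    exists (mkposreal (- t) ltac:(lra)). intros y Hy.
    change (Rabs (y - t) < - t) in Hy. apply Rabs_def2 in Hy.
    unfold rpow0. destruct (Rlt_dec 0 y); auto; lra.
  - apply rpow0_cont_at_0, Hd.
  - apply (continuous_ext_loc _ (fun t => exp (d * ln t))).
    + exists (mkposreal t Ht). intros y Hy.
      change (Rabs (y - t) < t) in Hy. apply Rabs_def2 in Hy.
      unfold rpow0. destruct (Rlt_dec 0 y); auto; lra.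
    + apply (@ex_derive_continuous R_AbsRing R_NormedModule). auto_derive; auto.
Qed.

Lemma rpow0_mult d s t : 0 <= s -> 0 <= t -> rpow0 d (s * t) = rpow0 d s * rpow0 d t.
Proof.
  intros Hs Ht. unfold rpow0.
  destruct (Rlt_dec 0 s), (Rlt_dec 0 t), (Rlt_dec 0 (s * t)); try nra.
  rewrite ln_mult, <- exp_plus by auto. f_equal; ring.
Qed.

Lemma rpow0_le d s t : 0 < d -> s <= t -> rpow0 d s <= rpow0 d t.
Proof.
  intros Hd Hst. unfold rpow0.
  destruct (Rlt_dec 0 s), (Rlt_dec 0 t); try lra; [|left; apply exp_pos].
  apply exp_le_compat, Rmult_le_compat_l; [lra|].
  destruct (Req_dec s t) as [->|]; [lra | left; apply ln_increasing; lra].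
Qed.

Lemma beta_expect_tilt a c d f : 0 < a -> 0 < c -> 0 < d ->
  beta_expect (a + d) c f * beta_expect a c (rpow0 d) = beta_expect a c (fun t => rpow0 d t * f t).
Proof.
  intros Ha Hc Hd. unfold beta_expect.
  assert (Hw : forall t, 0 < t < 1 -> rpow0 d t * beta_weight a c t = beta_weight (a + d) c t).
  { intros t Ht. unfold rpow0, beta_weight. destruct (Rlt_dec 0 t); [|lra].
    rewrite <- Rmult_assoc, <- exp_plus. f_equal. f_equal. ring. }
  rewrite (int01_ext (fun t => rpow0 d t * beta_weight a c t) (beta_weight (a + d) c))
    by exact Hw.
  rewrite (int01_ext (fun t => rpow0 d t * f t * beta_weight a c t)
                     (fun t => f t * beta_weight (a + d) c t))
    by (intros t Ht; rewrite <- Hw by exact Ht; ring).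
  pose proof (beta_int01_pos a c Ha Hc). pose proof (beta_int01_pos (a + d) c ltac:(lra) Hc).
  field. split; lra.
Qed.

Lemma beta_prod_expect_tilt a b m d f : beta_params m a b -> 0 < d -> Cont f ->
  beta_prod_expect (fun k => a k + d) (fun k => b k + d) m f * beta_prod_expect a b m (rpow0 d)
  = beta_prod_expect a b m (fun t => rpow0 d t * f t).
Proof.
  revert f. induction m as [|m IHm]; intros f H Hd Hf; [apply Rmult_comm|].
  destruct (beta_params_S m a b H) as [Hm [Ha Hc]].
  assert (HN := beta_prod_expect_Expectation a b m Hm).
  assert (HN' := beta_prod_expect_Expectation _ _ m (beta_params_shift m a b d ltac:(lra) Hm)).
  assert (HB := beta_expect_Expectation (a m) (b m - a m) Ha Hc).
  assert (Hpw := rpow0_Cont d Hd).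
  simpl. unfold expect_prod. replace (b m + d - (a m + d)) with (b m - a m) by ring.
  set (N := beta_prod_expect a b m). set (P := N (rpow0 d)).
  set (g := fun s => beta_prod_expect (fun k => a k + d) (fun k => b k + d) m
                       (fun t => f (s * t))).
  assert (Hg : Cont g) by (apply expect_dilate_cont; auto).
  assert (HP : beta_expect (a m) (b m - a m) (fun s => N (fun t => rpow0 d (s * t)))
               = P * beta_expect (a m) (b m - a m) (rpow0 d)).
  { rewrite <- (expect_scal _ HB) by exact Hpw. apply (expect_ext _ HB). intros s Hs.
    unfold P, N. rewrite Rmult_comm, <- (expect_scal _ HN) by exact Hpw.
    apply (expect_ext _ HN). intros t Ht. apply rpow0_mult; lra. }
  assert (Hf' : beta_expect (a m) (b m - a m) (fun s => N (fun t => rpow0 d (s * t) * f (s * t)))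
               = P * beta_expect (a m) (b m - a m) (fun s => rpow0 d s * g s)).
  { rewrite <- (expect_scal _ HB) by (apply Cont_mult; auto).
    apply (expect_ext _ HB). intros s Hs.
    transitivity (rpow0 d s * N (fun t => rpow0 d t * f (s * t))).
    - unfold N. rewrite <- (expect_scal _ HN) by (apply Cont_mult; [|apply Cont_dilate]; auto).
      apply (expect_ext _ HN). intros t Ht. rewrite rpow0_mult by lra. ring.
    - unfold g, P, N. rewrite <- IHm by (auto; apply Cont_dilate, Hf). ring. }
  rewrite HP, Hf', <- beta_expect_tilt by auto. ring.
Qed.

(** * Hypergeometric functions as expectations *)

Lemma is_series_tail_le (u M : nat -> R) l L N :
  (forall n, Rabs (u n) <= M n) -> is_series u l -> is_series M L ->
  Rabs (l - sum_n u N) <= L - sum_n M N.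
Proof.
  intros HuM Hu HM.
  assert (Hk : forall K, Rabs (sum_n u (K + N) - sum_n u N) <= sum_n M (K + N) - sum_n M N).
  { induction K as [|K IHK]; [simpl; rewrite Rminus_diag, Rabs_R0; lra|].
    replace (S K + N)%nat with (S (K + N)) by lia. rewrite !sum_Sn. unfold plus; simpl.
    replace (sum_n u (K + N) + u (S (K + N)) - sum_n u N)
      with ((sum_n u (K + N) - sum_n u N) + u (S (K + N))) by ring.
    eapply Rle_trans; [apply Rabs_triang|]. specialize (HuM (S (K + N))). lra. }
  change (is_lim_seq (sum_n u) l) in Hu. change (is_lim_seq (sum_n M) L) in HM.
  apply (is_lim_seq_incr_n _ N) in Hu. apply (is_lim_seq_incr_n _ N) in HM.
  assert (H1 : is_lim_seq (fun K => Rabs (sum_n u (K + N) - sum_n u N)) (Rabs (l - sum_n u N))).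
  { apply (is_lim_seq_continuous Rabs); [apply continuity_pt_filterlim, continuous_Rabs|].
    apply is_lim_seq_minus'; [exact Hu | apply is_lim_seq_const]. }
  assert (H2 : is_lim_seq (fun K => sum_n M (K + N) - sum_n M N) (L - sum_n M N))
    by (apply is_lim_seq_minus'; [exact HM | apply is_lim_seq_const]).
  exact (is_lim_seq_le _ _ _ _ Hk H1 H2).
Qed.

Lemma Cont_sum_n (fs : nat -> R -> R) N :
  (forall n, Cont (fs n)) -> Cont (fun t => sum_n (fun n => fs n t) N).
Proof.
  intros Hf. induction N as [|N IHN]; intros t.
  - apply (continuous_ext (fs 0%nat)); [intros; rewrite sum_O; auto | apply Hf].
  - apply (continuous_ext (fun t => sum_n (fun n => fs n t) N + fs (S N) t)).
    + intros; rewrite sum_Sn; auto.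
    + apply Cont_plus; auto.
Qed.

Lemma expect_sum_n E (fs : nat -> R -> R) N : Expectation E -> (forall n, Cont (fs n)) ->
  sum_n (fun n => E (fs n)) N = E (fun t => sum_n (fun n => fs n t) N).
Proof.
  intros HE Hf. induction N as [|N IHN].
  - rewrite sum_O. apply (expect_ext E HE). intros; rewrite sum_O; auto.
  - rewrite sum_Sn, IHN. unfold plus; simpl.
    rewrite <- (expect_plus E HE) by (auto; apply Cont_sum_n; auto).
    apply (expect_ext E HE). intros; rewrite sum_Sn; auto.
Qed.

Lemma is_series_expect E (fs : nat -> R -> R) f (M : nat -> R) :
  Expectation E -> (forall n, Cont (fs n)) -> Cont f ->
  (forall n t, 0 <= t <= 1 -> Rabs (fs n t) <= M n) -> ex_series M ->
  (forall t, 0 <= t <= 1 -> is_series (fun n => fs n t) (f t)) ->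
  is_series (fun n => E (fs n)) (E f).
Proof.
  intros HE Hfs Hf HM [L HL] Hser.
  change (is_lim_seq (sum_n (fun n => E (fs n))) (E f)).
  assert (Htail : forall N, Rabs (E f - sum_n (fun n => E (fs n)) N) <= L - sum_n M N).
  { intros N. rewrite expect_sum_n by auto.
    apply (expect_dist E HE); [auto | apply Cont_sum_n; auto |].
    intros t Ht. apply (is_series_tail_le (fun n => fs n t) M); auto. }
  assert (HL' : is_lim_seq (fun N => L - sum_n M N) 0).
  { replace (Finite 0) with (Finite (L - L)) by (f_equal; ring).
    apply is_lim_seq_minus'; [apply is_lim_seq_const | exact HL]. }
  apply is_lim_seq_le_le with (u := fun N => E f - (L - sum_n M N))
                              (w := fun N => E f + (L - sum_n M N)).
  - intros N. specialize (Htail N). apply Rabs_le_between in Htail. lra.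
  - replace (Finite (E f)) with (Finite (E f - 0)) by (f_equal; ring).
    apply is_lim_seq_minus'; auto. apply is_lim_seq_const.
  - replace (Finite (E f)) with (Finite (E f + 0)) by (f_equal; ring).
    apply is_lim_seq_plus'; auto. apply is_lim_seq_const.
Qed.

(* A continuous retraction of R onto [0,1], written with [Rabs] to inherit continuity:
   [(u + |u|) / 2 = max u 0] and [(1 + t - |t - 1|) / 2 = min 1 t]. *)
Definition clamp01 (t : R) : R :=
  ((1 + t - Rabs (t - 1)) / 2 + Rabs ((1 + t - Rabs (t - 1)) / 2)) / 2.

Lemma clamp01_id t : 0 <= t <= 1 -> clamp01 t = t.
Proof.
  intros Ht. unfold clamp01. rewrite (Rabs_left1 (t - 1)) by lra.
  replace ((1 + t - - (t - 1)) / 2) with t by field.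
  rewrite Rabs_right by lra. field.
Qed.

Lemma clamp01_bounds t : 0 <= clamp01 t <= 1.
Proof.
  unfold clamp01. destruct (Rle_dec 1 t).
  - rewrite (Rabs_right (t - 1)) by lra.
    replace ((1 + t - (t - 1)) / 2) with 1 by field. rewrite Rabs_R1. lra.
  - rewrite (Rabs_left1 (t - 1)) by lra.
    replace ((1 + t - - (t - 1)) / 2) with t by field.
    destruct (Rle_dec 0 t); [rewrite Rabs_right | rewrite Rabs_left]; lra.
Qed.

Lemma Cont_clamp01 : Cont clamp01.
Proof.
  assert (Hid : Cont (fun t => t)) by (intros t; apply continuous_id).
  assert (Habs : forall f, Cont f -> Cont (fun t => Rabs (f t)))
    by (intros f Hf; apply (Cont_comp f Rabs Hf); intros t; apply continuous_Rabs).
  assert (Hmin : Cont (fun t => (1 + t - Rabs (t - 1)) / 2)).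
  { intros t. apply (continuous_scal_l (fun t => 1 + t - Rabs (t - 1)) (/ 2)).
    apply Cont_minus; [apply Cont_plus; [apply Cont_const | exact Hid]|].
    apply Habs, Cont_minus; [exact Hid | apply Cont_const]. }
  intros t. unfold clamp01.
  apply (continuous_scal_l (fun t => (1 + t - Rabs (t - 1)) / 2
                                     + Rabs ((1 + t - Rabs (t - 1)) / 2)) (/ 2)).
  apply Cont_plus; [exact Hmin | apply Habs, Hmin].
Qed.

Lemma one_minus_mul_pos z t : z < 1 -> 0 <= t <= 1 -> 0 < 1 - z * t.
Proof. intros Hz Ht. destruct (Rle_dec z 0); nra. Qed.

(* [(1 - z T)^(-s)]; the clamp makes it continuous on R, as [Expectation] requires. *)
Definition binom_kernel (s z t : R) : R := Rpower (1 - z * clamp01 t) (- s).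

Lemma Cont_binom_kernel s z : z < 1 -> Cont (binom_kernel s z).
Proof.
  intros Hz. apply Cont_Rpower.
  - apply Cont_minus; [apply Cont_const | apply Cont_scal, Cont_clamp01].
  - intros t. apply one_minus_mul_pos; auto. apply clamp01_bounds.
Qed.

Lemma binom_kernel_pos s z t : 0 < binom_kernel s z t.
Proof. apply exp_pos. Qed.

Lemma Rpower_minus_INR b y n : 0 < b -> Rpower b (y - INR n) = Rpower b y / b ^ n.
Proof.
  intros Hb. unfold Rminus. rewrite Rpower_plus, Rpower_Ropp, Rpower_pow by exact Hb.
  reflexivity.
Qed.

Definition kernel_term (s z0 : R) (n : nat) (t : R) : R :=
  clamp01 t ^ n * Rpower (1 - z0 * clamp01 t) (- s - INR n).

Lemma Cont_kernel_term s z0 n : z0 < 1 -> Cont (kernel_term s z0 n).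
Proof.
  intros Hz0. apply Cont_mult.
  - apply (Cont_comp clamp01 (fun x => x ^ n)); [apply Cont_clamp01 | apply Cont_pow].
  - apply Cont_Rpower; [apply Cont_minus; [apply Cont_const | apply Cont_scal, Cont_clamp01]|].
    intros t. apply one_minus_mul_pos; auto. apply clamp01_bounds.
Qed.

(* Re-expanding the binomial series around [z0]: with [u = (z - z0) t / (1 - z0 t)],
   [(1 - z t)^(-s) = (1 - z0 t)^(-s) (1 - u)^(-s)]. *)
Lemma kernel_term_rescale s z0 z n t : 0 <= t <= 1 -> z0 < 1 ->
  binom_coef s n * (z - z0) ^ n * kernel_term s z0 n t
  = Rpower (1 - z0 * t) (- s) * (binom_coef s n * ((z - z0) * t / (1 - z0 * t)) ^ n).
Proof.
  intros Ht Hz0. unfold kernel_term. rewrite clamp01_id by exact Ht.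
  assert (HD : 0 < 1 - z0 * t) by (apply one_minus_mul_pos; auto).
  rewrite Rpower_minus_INR by exact HD. unfold Rdiv.
  rewrite !Rpow_mult_distr, pow_inv. ring.
Qed.

Lemma rescale_Rabs_le z0 z t rho : 0 <= t <= 1 -> z0 < 1 ->
  Rabs ((z - z0) * t) <= rho * (1 - z0 * t) ->
  Rabs ((z - z0) * t / (1 - z0 * t)) <= rho.
Proof.
  intros Ht Hz0 Hb. assert (HD : 0 < 1 - z0 * t) by (apply one_minus_mul_pos; auto).
  unfold Rdiv. rewrite Rabs_mult, Rabs_inv, (Rabs_right (1 - z0 * t)) by lra.
  apply (Rmult_le_reg_r (1 - z0 * t)); [exact HD|].
  rewrite Rmult_assoc, Rinv_l by lra. lra.
Qed.

Definition kernel_coef (s : R) (E : (R -> R) -> R) (z0 : R) (n : nat) : R :=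
  binom_coef s n * E (kernel_term s z0 n).

Lemma is_series_expect_kernel s E z0 z rho : Expectation E -> z0 < 1 -> z < 1 -> 0 <= rho < 1 ->
  (forall t, 0 <= t <= 1 -> Rabs ((z - z0) * t) <= rho * (1 - z0 * t)) ->
  is_series (fun n => kernel_coef s E z0 n * (z - z0) ^ n) (E (binom_kernel s z)).
Proof.
  intros HE Hz0 Hz Hrho Hb.
  set (fs := fun n t => binom_coef s n * (z - z0) ^ n * kernel_term s z0 n t).
  destruct (Cont_bounded (binom_kernel s z0) 0 1 (Cont_binom_kernel s z0 Hz0)) as [K HK].
  apply is_series_ext with (a := fun n => E (fs n)).
  { intros n. unfold fs, kernel_coef. rewrite (expect_scal E HE) by (apply Cont_kernel_term; auto).
    rewrite Rmult_assoc, (Rmult_comm ((z - z0) ^ n)), <- Rmult_assoc. reflexivity. }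
  apply (is_series_expect E fs _ (fun n => Rabs (binom_coef s n * rho ^ n) * Rabs K)); auto.
  - intros n. apply Cont_scal, Cont_kernel_term, Hz0.
  - apply Cont_binom_kernel, Hz.
  - intros n t Ht. unfold fs. rewrite kernel_term_rescale by auto.
    specialize (HK t Ht). unfold binom_kernel in HK. rewrite clamp01_id in HK by exact Ht.
    rewrite Rmult_comm, !Rabs_mult, (Rabs_right (rho ^ n)) by (apply Rle_ge, pow_le; lra).
    apply Rmult_le_compat; try (apply Rmult_le_pos); try apply Rabs_pos.
    + apply Rmult_le_compat_l; [apply Rabs_pos|].
      rewrite <- RPow_abs. apply pow_incr. split; [apply Rabs_pos|].
      apply rescale_Rabs_le; auto.
    + eapply Rle_trans; [apply HK | apply RRle_abs].
  - apply (ex_series_scal_r (Rabs K) (fun n => Rabs (binom_coef s n * rho ^ n))).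
    apply ex_series_Rabs_binom_coef. rewrite Rabs_right; lra.
  - intros t Ht. unfold binom_kernel. rewrite clamp01_id by exact Ht.
    assert (HD : 0 < 1 - z0 * t) by (apply one_minus_mul_pos; auto).
    set (u := (z - z0) * t / (1 - z0 * t)).
    assert (Hu : Rabs u < 1) by (apply Rle_lt_trans with rho; [apply rescale_Rabs_le; auto | lra]).
    assert (H1u : 0 < 1 - u) by (apply Rabs_def2 in Hu; lra).
    replace (1 - z * t) with ((1 - z0 * t) * (1 - u)) by (unfold u; field; lra).
    rewrite <- Rpower_mult_distr by auto.
    apply (is_series_ext (fun n => Rpower (1 - z0 * t) (- s) * (binom_coef s n * u ^ n))).
    + intros n. unfold fs. rewrite kernel_term_rescale by auto. reflexivity.
    + pose proof (is_series_binomial s u Hu) as Hs.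
      apply (is_series_scal_l (Rpower (1 - z0 * t) (- s))) in Hs. exact Hs.
Qed.

Lemma pseries_zero_right_coef0 (e : nat -> R) r : 0 < r ->
  (forall x, 0 < x < r -> is_series (fun n => e n * x ^ n) 0) -> e 0%nat = 0.
Proof.
  intros Hr Hs.
  assert (Hrad : Rbar_lt (Rabs 0) (CV_radius e)).
  { destruct (filterlim_bounded (fun n => e n * (r / 2) ^ n)) as [M HM].
    { exists 0. apply ex_series_lim_0. eexists. apply Hs. lra. }
    apply Rbar_lt_le_trans with (r / 2); [rewrite Rabs_R0; simpl; lra|].
    apply (proj1 (CV_radius_bounded e)). exists M. exact HM. }
  assert (Hc : filterlim (PSeries e) (at_right 0) (locally (PSeries e 0))).
  { apply (filterlim_filter_le_1 _ (filter_le_within _)).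
    apply continuity_pt_filterlim, PSeries_continuity, Hrad. }
  assert (H0 : filterlim (PSeries e) (at_right 0) (locally 0)).
  { apply (filterlim_ext_loc (fun _ => 0)); [|apply filterlim_const].
    exists (mkposreal r Hr). intros x Hx Hx0.
    change (Rabs (x - 0) < r) in Hx. rewrite Rminus_0_r in Hx. apply Rabs_def2 in Hx.
    symmetry. apply is_series_unique.
    apply (is_series_ext (fun n => e n * x ^ n)); [|apply Hs; lra].
    intros n. unfold scal; simpl; unfold mult; simpl. reflexivity. }
  rewrite <- PSeries_0.
  exact (filterlim_locally_unique (F := at_right 0) _ _ _ Hc H0).
Qed.

Lemma pseries_zero_right_coef (d : nat -> R) r : 0 < r ->
  (forall x, 0 < x < r -> is_series (fun n => d n * x ^ n) 0) -> forall n, d n = 0.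
Proof.
  intros Hr Hs.
  (* Strip the vanishing coefficients one at a time. *)
  assert (Hk : forall k x, 0 < x < r -> is_series (fun n => d (k + n)%nat * x ^ n) 0).
  { induction k as [|k IHk]; intros x Hx; [exact (Hs x Hx)|].
    assert (Hdk : d k = 0).
    { rewrite <- (Nat.add_0_r k). apply (pseries_zero_right_coef0 _ r Hr IHk). }
    assert (Htail : is_series (fun n => d (k + S n)%nat * x ^ S n) 0).
    { apply (is_series_incr_1 (fun n => d (k + n)%nat * x ^ n)).
      rewrite Nat.add_0_r, Hdk. unfold plus; simpl. rewrite Rmult_0_l, Rplus_0_r.
      apply IHk, Hx. }
    apply (is_series_scal_l (/ x)) in Htail.
    unfold scal in Htail; simpl in Htail; unfold mult in Htail; simpl in Htail.
    rewrite Rmult_0_r in Htail.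
    apply (is_series_ext _ _ _ (fun n => eq_refl)) in Htail.
    eapply is_series_ext; [|exact Htail]. intros n. simpl.
    rewrite <- plus_n_Sm. field. lra. }
  intros n. rewrite <- (Nat.add_0_r n).
  apply (pseries_zero_right_coef0 _ r Hr (Hk n)).
Qed.

Definition expandable_at (g : R -> R) (z0 : R) : Prop :=
  exists r, 0 < r /\ exists c : nat -> R,
    forall z, Rabs (z - z0) < r -> z < 1 -> is_series (fun n => c n * (z - z0) ^ n) (g z).

Lemma expandable_agree_left g1 g2 m : m < 1 ->
  expandable_at g1 m -> expandable_at g2 m -> (forall y, m < y < 1 -> g1 y = g2 y) ->
  exists r, 0 < r /\ forall y, m - r < y < 1 -> g1 y = g2 y.
Proof.
  intros Hm [r1 [Hr1 [c1 Hc1]]] [r2 [Hr2 [c2 Hc2]]] Hright.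
  set (r := Rmin (Rmin r1 r2) (1 - m)).
  assert (Hr : 0 < r) by (unfold r; repeat apply Rmin_pos; lra).
  assert (Hrr : r <= r1 /\ r <= r2 /\ r <= 1 - m).
  { unfold r. pose proof (Rmin_l (Rmin r1 r2) (1 - m)). pose proof (Rmin_r (Rmin r1 r2) (1 - m)).
    pose proof (Rmin_l r1 r2). pose proof (Rmin_r r1 r2). lra. }
  assert (Hser : forall z, Rabs (z - m) < r ->
            is_series (fun n => (c1 n - c2 n) * (z - m) ^ n) (g1 z - g2 z)).
  { intros z Hz. apply Rabs_def2 in Hz.
    assert (Hz1 : Rabs (z - m) < r1) by (apply Rabs_def1; lra).
    assert (Hz2 : Rabs (z - m) < r2) by (apply Rabs_def1; lra).
    eapply is_series_ext; [|exact (is_series_minus _ _ _ _ (Hc1 z Hz1 ltac:(lra))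
                                                        (Hc2 z Hz2 ltac:(lra)))].
    intros n. unfold minus, plus, opp; simpl. ring. }
  assert (Hc : forall n, c1 n - c2 n = 0).
  { apply (pseries_zero_right_coef _ r Hr). intros x Hx.
    assert (H : Rabs (m + x - m) < r) by (replace (m + x - m) with x by ring;
                                          rewrite Rabs_right; lra).
    apply Hser in H. replace (m + x - m) with x in H by ring.
    rewrite (Hright (m + x)), Rminus_diag in H by lra. exact H. }
  exists r. split; [exact Hr|]. intros y Hy.
  destruct (Rle_dec y m) as [Hym|Hym]; [|apply Hright; lra].
  apply Rminus_diag_uniq.
  assert (Hy' : Rabs (y - m) < r) by (apply Rabs_def1; lra).
  rewrite <- (is_series_unique _ _ (Hser y Hy')).
  rewrite (Series_ext _ (fun n => 0 * ((c1 n - c2 n) * (y - m) ^ n)))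
    by (intros n; rewrite Hc; ring).
  rewrite Series_scal_l. ring.
Qed.

Lemma hyp_continuation_unique q s a b g1 g2 :
  is_hyp_continuation q s a b g1 -> is_hyp_continuation q s a b g2 ->
  forall z, z < 1 -> g1 z = g2 z.
Proof.
  intros [H1a H1b] [H2a H2b] z1 Hz1. apply NNPP; intros Hne.
  (* [U] is the sup of the [u] such that [g1 = g2] on [(-u, 1)]. *)
  set (T := fun u => forall y, - u < y < 1 -> g1 y = g2 y).
  assert (HT1 : T 1).
  { intros y Hy. rewrite <- (is_series_unique _ _ (H1a y ltac:(lra))).
    apply is_series_unique, H2a. lra. }
  destruct (completeness T) as [U [HU1 HU2]].
  { exists (- z1). intros u Hu. apply Rnot_lt_le. intros Hlt. apply Hne, Hu. lra. }
  { exists 1; exact HT1. }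
  assert (HU : 1 <= U) by (apply HU1, HT1).
  assert (Hright : forall y, - U < y < 1 -> g1 y = g2 y).
  { intros y Hy. apply NNPP; intros Hn.
    assert (Hub : is_upper_bound T (- y)).
    { intros u Hu. apply Rnot_lt_le. intros Hlt. apply Hn, Hu. lra. }
    specialize (HU2 _ Hub). lra. }
  assert (HUm : - U < 1) by lra.
  destruct (expandable_agree_left g1 g2 (- U) HUm (H1b _ HUm) (H2b _ HUm) Hright)
    as [r [Hr Hleft]].
  assert (HTr : T (U + r)) by (intros y Hy; apply Hleft; lra).
  specialize (HU1 _ HTr). lra.
Qed.

Lemma kernel_coef_at_0 q s a b n : beta_params q a b ->
  kernel_coef s (beta_prod_expect a b q) 0 n = hyp_coef q s a b n.
Proof.
  intros Hv. assert (HE := beta_prod_expect_Expectation a b q Hv).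
  unfold kernel_coef, hyp_coef.
  rewrite (expect_ext _ HE _ (fun t => t ^ n)).
  - rewrite beta_prod_expect_pow by exact Hv. unfold binom_coef, Rdiv. ring.
  - intros t Ht. unfold kernel_term. rewrite clamp01_id, Rmult_0_l, Rminus_0_r, Rpower_1_l
      by exact Ht. ring.
Qed.

Lemma is_hyp_continuation_beta q s a b : beta_params q a b ->
  is_hyp_continuation q s a b (fun z => beta_prod_expect a b q (binom_kernel s z)).
Proof.
  intros Hv. assert (HE := beta_prod_expect_Expectation a b q Hv). split.
  - intros z Hz.
    assert (Hz' : 0 <= Rabs z < 1) by (split; [apply Rabs_pos | apply Rabs_def1; lra]).
    eapply is_series_ext; [|apply (is_series_expect_kernel s _ 0 z (Rabs z) HE); try lra].
    + intros n. simpl. rewrite kernel_coef_at_0, Rminus_0_r by exact Hv. reflexivity.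
    + intros t Ht. rewrite Rminus_0_r, Rabs_mult, (Rabs_right t) by lra.
      pose proof (Rabs_pos z). nra.
  - intros z0 Hz0.
    (* [1 - z0 t >= min 1 (1 - z0)] on [0,1], so radius [min 1 (1 - z0) / 2] works
       with [rho = 1/2]. *)
    set (m0 := Rmin 1 (1 - z0)).
    assert (Hm0 : 0 < m0) by (apply Rmin_pos; lra).
    assert (Hm0b : forall t, 0 <= t <= 1 -> m0 <= 1 - z0 * t).
    { intros t Ht. unfold m0. destruct (Rle_dec z0 0).
      - eapply Rle_trans; [apply Rmin_l | nra].
      - eapply Rle_trans; [apply Rmin_r | nra]. }
    exists (m0 / 2). split; [lra|].
    exists (kernel_coef s (beta_prod_expect a b q) z0). intros z Hz Hz1.
    apply (is_series_expect_kernel s _ z0 z (1/2) HE Hz0 Hz1); [lra|].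
    intros t Ht. rewrite Rabs_mult, (Rabs_right t) by lra. specialize (Hm0b t Ht).
    pose proof (Rabs_pos (z - z0)). nra.
Qed.

Lemma hypF_beta_prod_expect q s a b z : beta_params q a b -> z < 1 ->
  hypF q s a b z = beta_prod_expect a b q (binom_kernel s z).
Proof.
  intros Hv Hz. unfold hypF.
  assert (Hc := is_hyp_continuation_beta q s a b Hv).
  apply (hyp_continuation_unique q s a b _ (fun z => beta_prod_expect a b q (binom_kernel s z)));
    [|exact Hc|exact Hz].
  exact (epsilon_spec (inhabits (fun _ : R => 0)) (is_hyp_continuation q s a b)
           (ex_intro _ _ Hc)).
Qed.

Lemma prodR_pos q g : (forall k, (k < q)%nat -> 0 < g k) -> 0 < prodR q g.
Proof.
  induction q as [|q IHq]; intros H; simpl; [lra|].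
  apply Rmult_lt_0_compat; [apply IHq; intros; apply H; lia | apply H; lia].
Qed.

(* [t ^ d >= t ^ N] on [0,1] for an integer [N >= d], and [E T^N] is an explicit product. *)
Lemma beta_prod_expect_rpow0_pos q a b d : beta_params q a b -> 0 < d ->
  0 < beta_prod_expect a b q (rpow0 d).
Proof.
  intros Hv Hd. assert (HE := beta_prod_expect_Expectation a b q Hv).
  destruct (INR_unbounded d) as [N HN].
  apply Rlt_le_trans with (beta_prod_expect a b q (fun t => t ^ N)).
  - rewrite beta_prod_expect_pow by exact Hv. apply prodR_pos. intros k Hk.
    destruct (Hv k Hk). apply Rdiv_lt_0_compat; apply poch_pos; lra.
  - apply (expect_le _ HE); [apply Cont_pow | apply rpow0_Cont, Hd |].
    intros t Ht. unfold rpow0. destruct (Rlt_dec 0 t).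
    + rewrite pow_exp_ln by auto. apply exp_le_compat.
      pose proof (ln_le_0 t ltac:(lra)). nra.
    + replace t with 0 by lra. destruct N; simpl in *; lra.
Qed.

(** * Chebyshev's inequality and monotonicity *)

Definition nondecreasing01 (h : R -> R) := forall s t, 0 <= s <= t -> t <= 1 -> h s <= h t.

Definition nonincreasing01 (g : R -> R) := forall s t, 0 <= s <= t -> t <= 1 -> g t <= g s.

(* [t0] is where [h] crosses the level [c]: [sup {t in [0,1] | h t < c}]. *)
Lemma monotone_crossing h g c : nondecreasing01 h -> nonincreasing01 g ->
  exists t0, 0 <= t0 <= 1 /\ forall t, 0 <= t <= 1 -> (h t - c) * (g t - g t0) <= 0.
Proof.
  intros Hh Hg.
  destruct (classic (exists t, 0 <= t <= 1 /\ h t < c)) as [[t1 Ht1]|Hno].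
  - set (S := fun t => 0 <= t <= 1 /\ h t < c).
    destruct (completeness S) as [t0 [Hub Hlub]].
    { exists 1. intros t Ht; apply Ht. }
    { exists t1; exact Ht1. }
    assert (t1 <= t0) by (apply Hub, Ht1).
    assert (t0 <= 1) by (apply Hlub; intros t Ht; apply Ht).
    exists t0. split; [lra|]. intros t Ht.
    destruct (Rlt_le_dec (h t) c) as [Hlt|Hge].
    + assert (t <= t0) by (apply Hub; split; auto).
      assert (g t0 <= g t) by (apply Hg; lra). nra.
    + assert (Hub2 : is_upper_bound S t).
      { intros u [Hu1 Hu2]. apply Rnot_lt_le. intros Htu.
        assert (h t <= h u) by (apply Hh; lra). lra. }
      assert (t0 <= t) by (apply Hlub, Hub2).
      assert (g t <= g t0) by (apply Hg; lra). nra.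
  - exists 0. split; [lra|]. intros t Ht.
    assert (c <= h t) by (apply Rnot_lt_le; intros Hlt; apply Hno; exists t; auto).
    assert (g t <= g 0) by (apply Hg; lra). nra.
Qed.

Section Chebyshev.

Variables (E : (R -> R) -> R) (h g w : R -> R).
Hypotheses (HE : Expectation E) (Hh : Cont h) (Hg : Cont g) (Hw : Cont w)
  (Hhm : nondecreasing01 h) (Hw0 : forall t, 0 <= t <= 1 -> 0 <= w t) (HEw : 0 < E w).

(* Chebyshev's correlation inequality for the measure [w dE]. *)
Lemma expect_chebyshev : nonincreasing01 g ->
  E (fun t => h t * g t * w t) * E w <= E (fun t => h t * w t) * E (fun t => g t * w t).
Proof.
  intros Hgm.
  set (c := E (fun t => h t * w t) / E w).
  destruct (monotone_crossing h g c Hhm Hgm) as [t0 [Ht0 Hcross]].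
  assert (Hhw : Cont (fun t => h t * w t)) by (apply Cont_mult; auto).
  assert (Hgw : Cont (fun t => g t * w t)) by (apply Cont_mult; auto).
  assert (Hhgw : Cont (fun t => h t * g t * w t)) by (repeat apply Cont_mult; auto).
  assert (Hle : E (fun t => (h t - c) * (g t - g t0) * w t) <= 0).
  { rewrite <- (expect_const E HE 0). apply (expect_le E HE); [|apply Cont_const|].
    - repeat apply Cont_mult; auto; apply Cont_minus; auto; apply Cont_const.
    - intros t Ht. specialize (Hcross t Ht). specialize (Hw0 t Ht). nra. }
  rewrite (expect_ext E HE _ (fun t => (h t * g t * w t - c * (g t * w t))
                                        - (g t0 * (h t * w t) - g t0 * c * w t))) in Hle
    by (intros; ring).
  rewrite !(expect_minus E HE), !(expect_scal E HE) in Hle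
    by repeat first [apply Cont_minus | apply Cont_scal | assumption].
  replace (E (fun t => h t * w t)) with (c * E w) in * by (unfold c; field; lra).
  apply Rmult_le_compat_r with (r := E w) in Hle; [|lra]. nra.
Qed.

End Chebyshev.

Lemma expect_chebyshev_same E h g w : Expectation E -> Cont h -> Cont g -> Cont w ->
  nondecreasing01 h -> (forall t, 0 <= t <= 1 -> 0 <= w t) -> 0 < E w -> nondecreasing01 g ->
  E (fun t => h t * w t) * E (fun t => g t * w t) <= E (fun t => h t * g t * w t) * E w.
Proof.
  intros HE Hh Hg Hw Hhm Hw0 HEw Hgm.
  assert (Hc := expect_chebyshev E h (fun t => - g t) w HE Hh (Cont_opp g Hg) Hw Hhm Hw0 HEw).
  cbv beta in Hc.
  rewrite (expect_ext E HE (fun t => h t * - g t * w t) (fun t => - (h t * g t * w t))),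
    (expect_ext E HE (fun t => - g t * w t) (fun t => - (g t * w t))),
    !(expect_opp E HE) in Hc by (intros; first [ring | repeat apply Cont_mult; auto]).
  enough (nonincreasing01 (fun t => - g t)) by (specialize (Hc H); lra).
  intros s t Hs Ht. apply Ropp_le_contravar, Hgm; auto.
Qed.

Lemma Rdiv_le_cross a b c d : 0 < b -> 0 < d -> a * d <= c * b -> a / b <= c / d.
Proof.
  intros Hb Hd H. apply (Rmult_le_reg_r (b * d)); [nra|].
  replace (a / b * (b * d)) with (a * d) by (field; lra).
  replace (c / d * (b * d)) with (c * b) by (field; lra). exact H.
Qed.

Lemma one_plus_mul_clamp01_pos x t : -1 < x -> 0 < 1 + x * clamp01 t.
Proof. intros Hx. pose proof (clamp01_bounds t). destruct (Rle_dec 0 x); nra. Qed.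

Lemma affine_ratio_le x y u v : -1 < x -> x < y -> 0 <= u <= v -> v <= 1 ->
  0 < (1 + y * u) / (1 + x * u) <= (1 + y * v) / (1 + x * v).
Proof.
  intros Hx Hxy Huv Hv.
  assert (0 < 1 + x * u) by (destruct (Rle_dec 0 x); nra).
  assert (0 < 1 + x * v) by (destruct (Rle_dec 0 x); nra).
  split; [apply Rdiv_lt_0_compat; nra|].
  apply Rdiv_le_cross; nra.
Qed.

(* [E (T^d (1 + x T)^(-s)) / E ((1 + x T)^(-s))]: the mean of [T^d] under the law of [T]
   reweighted by [(1 + x T)^(-s)]. *)
Definition tilt_ratio (E : (R -> R) -> R) (d s x : R) : R :=
  E (fun t => rpow0 d t * binom_kernel s (- x) t) / E (binom_kernel s (- x)).

Section TiltedKernel.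

Variables (E : (R -> R) -> R) (d s x y : R).
Hypotheses (HE : Expectation E) (Hd : 0 < d) (Hx : -1 < x) (Hxy : x < y).

(* The likelihood ratio [((1 + y T) / (1 + x T))^(-s)] between the two reweightings. *)
Let g (t : R) : R := binom_kernel s (- y) t * Rpower (1 + x * clamp01 t) s.

Lemma binom_kernel_neg u t : binom_kernel s (- u) t = Rpower (1 + u * clamp01 t) (- s).
Proof. unfold binom_kernel. f_equal. ring. Qed.

Lemma Cont_ratio : Cont g.
Proof.
  apply Cont_mult; [apply Cont_binom_kernel; lra|].
  apply Cont_Rpower; [|intros; apply one_plus_mul_clamp01_pos, Hx].
  apply Cont_plus; [apply Cont_const | apply Cont_scal, Cont_clamp01].
Qed.

Lemma ratio_mul_kernel t : g t * binom_kernel s (- x) t = binom_kernel s (- y) t.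
Proof.
  unfold g. rewrite (binom_kernel_neg x), Rmult_assoc, <- Rpower_plus,
    Rplus_opp_r, Rpower_O by apply one_plus_mul_clamp01_pos, Hx. ring.
Qed.

Lemma ratio_Rpower t : 0 <= t <= 1 -> g t = Rpower ((1 + y * t) / (1 + x * t)) (- s).
Proof.
  intros Ht. unfold g. rewrite binom_kernel_neg, clamp01_id by exact Ht.
  assert (0 < 1 + x * t) by (pose proof (one_plus_mul_clamp01_pos x t Hx);
                             rewrite clamp01_id in H; auto).
  assert (0 < 1 + y * t) by nra.
  unfold Rpower, Rdiv. rewrite <- exp_plus, ln_mult, ln_Rinv by (auto; apply Rinv_0_lt_compat; auto).
  f_equal; ring.
Qed.

Let rpow0_nondecreasing : nondecreasing01 (rpow0 d).
Proof. intros u v Huv _. apply rpow0_le; lra. Qed.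

Let kernel_x_nonneg : forall t, 0 <= t <= 1 -> 0 <= binom_kernel s (- x) t.
Proof. intros; left; apply binom_kernel_pos. Qed.

Let expect_kernel_x_pos : 0 < E (binom_kernel s (- x)).
Proof.
  apply (expect_pos E HE); [apply Cont_binom_kernel; lra|]. intros; apply binom_kernel_pos.
Qed.

Let expect_kernel_y_pos : 0 < E (binom_kernel s (- y)).
Proof.
  apply (expect_pos E HE); [apply Cont_binom_kernel; lra|]. intros; apply binom_kernel_pos.
Qed.

Let expect_tilted_ratio : E (fun t => rpow0 d t * g t * binom_kernel s (- x) t)
            = E (fun t => rpow0 d t * binom_kernel s (- y) t).
Proof. apply (expect_ext E HE). intros. rewrite <- ratio_mul_kernel. ring. Qed.

Let expect_weighted_ratio : E (fun t => g t * binom_kernel s (- x) t) = E (binom_kernel s (- y)).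
Proof. apply (expect_ext E HE). intros. apply ratio_mul_kernel. Qed.

Lemma tilt_ratio_antitone : 0 < s -> tilt_ratio E d s y <= tilt_ratio E d s x.
Proof.
  intros Hs. apply Rdiv_le_cross; auto.
  rewrite <- expect_tilted_ratio, <- expect_weighted_ratio.
  apply expect_chebyshev; auto using rpow0_Cont, Cont_ratio, Cont_binom_kernel.
  - apply Cont_binom_kernel; lra.
  - intros u v Huv Hv. rewrite !ratio_Rpower by lra.
    destruct (affine_ratio_le x y u v Hx Hxy Huv Hv).
    rewrite !Rpower_Ropp. apply Rinv_le_contravar; [apply exp_pos | apply Rle_Rpower_l; lra].
Qed.

Lemma tilt_ratio_monotone : s < 0 -> tilt_ratio E d s x <= tilt_ratio E d s y.
Proof.
  intros Hs. apply Rdiv_le_cross; auto.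
  rewrite <- expect_tilted_ratio, <- expect_weighted_ratio.
  apply expect_chebyshev_same; auto using rpow0_Cont, Cont_ratio.
  - apply Cont_binom_kernel; lra.
  - intros u v Huv Hv. rewrite !ratio_Rpower by lra.
    destruct (affine_ratio_le x y u v Hx Hxy Huv Hv). apply Rle_Rpower_l; lra.
Qed.

End TiltedKernel.

Lemma hypF_shift_ratio q a b d s x : beta_params q a b -> 0 < d -> -1 < x ->
  hypF q s (fun k => a k + d) (fun k => b k + d) (- x) / hypF q s a b (- x)
  = tilt_ratio (beta_prod_expect a b q) d s x / beta_prod_expect a b q (rpow0 d).
Proof.
  intros Hv Hd Hx.
  assert (HE := beta_prod_expect_Expectation a b q Hv).
  assert (HK : Cont (binom_kernel s (- x))) by (apply Cont_binom_kernel; lra).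
  rewrite !hypF_beta_prod_expect by (try apply beta_params_shift; auto; lra).
  unfold tilt_ratio. rewrite <- beta_prod_expect_tilt by auto.
  assert (0 < beta_prod_expect a b q (binom_kernel s (- x)))
    by (apply (expect_pos _ HE _ HK); intros; apply binom_kernel_pos).
  pose proof (beta_prod_expect_rpow0_pos q a b d Hv Hd).
  field. split; lra.
Qed.

Theorem theorem1 (q : nat) (delta sigma : R) (a b : nat -> R) :
  (1 <= q)%nat -> 0 < delta -> sigma <> 0 ->
  (forall k, (k < q)%nat -> 0 < a k < b k) ->
  let f := fun x : R =>
    hypF q sigma (fun k => a k + delta) (fun k => b k + delta) (- x)
    / hypF q sigma a b (- x) in
  (0 < sigma -> forall x y, -1 < x -> x < y -> f y <= f x) /\
  (sigma < 0 -> forall x y, -1 < x -> x < y -> f x <= f y).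
Proof.
  intros _ Hd _ Hv f.
  set (E := beta_prod_expect a b q).
  assert (HE : Expectation E) by exact (beta_prod_expect_Expectation a b q Hv).
  assert (HP := beta_prod_expect_rpow0_pos q a b delta Hv Hd).
  assert (Hf : forall x, -1 < x -> f x = tilt_ratio E delta sigma x / E (rpow0 delta))
    by (intros x Hx; apply hypF_shift_ratio; auto).
  assert (Hscale : forall u v, u <= v -> u / E (rpow0 delta) <= v / E (rpow0 delta))
    by (intros u v Huv; apply Rmult_le_compat_r; [left; apply Rinv_0_lt_compat |]; auto).
  split; intros Hs x y Hx Hxy; rewrite !Hf by lra; apply Hscale.
  - apply tilt_ratio_antitone; auto.
  - apply tilt_ratio_monotone; auto.
Qed.
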